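(* If $\mathcal{O}$ is a decomposable set of Scott-open modalities, then the open extension of the relation of applicative $\mathcal{O}$-similarity is compatible.
   Context: Language: types $\tau ::= \mathbf{1} \mid \mathbf{N} \mid \tau \to \tau'$; signature $\Sigma$ of effect operations with arities $\alpha^n\to\alpha$, $\mathbf{N}\times\alpha^n\to\alpha$, $\alpha^{\mathbf{N}}\to\alpha$ or $\mathbf{N}\times\alpha^{\mathbf{N}}\to\alpha$. Values $V ::= * \mid Z \mid S(V) \mid \lambda x{:}\tau.M \mid x$; computations $M ::= VW \mid \mathbf{return}\,V \mid \mathbf{let}\ M\Rightarrow x\ \mathbf{in}\ N \mid \mathbf{fix}(V) \mid \mathbf{case}\ V\ \mathbf{of}\ \{Z\Rightarrow M; S(x)\Rightarrow N\} \mid \sigma(M_0,\dots) \mid \sigma(V;M_0,\dots) \mid \sigma(V)\mid\sigma(V;W)$, simply typed call-by-value. $\mathit{Val}(\tau)$, $\mathit{Com}(\tau)$: closed values/computations. Effect trees $TX$: possibly infinite trees with leaves $\bot$ or elements of $X$ and internal nodes labelled by effect operations (or $\sigma_m$, $m\in\mathbb{N}$) with $n$ or $\mathbb{N}$-many children according to arity; $t\le t'$ iff $t$ results from $t'$ by replacing subtrees with $\bot$ ($\omega$-cpo). $\mu:TTX\to TX$ flattens trees of trees. Each $M\in\mathit{Com}(\tau)$ has an operational effect tree $|M|\in T(\mathit{Val}(\tau))$ from call-by-value evaluation. Modalities: set $\mathcal{O}$, $[\![o]\!]\subseteq T\mathbf{1}$; $t[\in P]$ replaces leaves in $P$ by $*$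 and others by $\bot$; $o(A)=\{t\mid t[\in A]\in[\![o]\!]\}$. Scott-open: $[\![o]\!]$ upward closed, and if the supremum of an ascending chain lies in $[\![o]\!]$ then some chain element does. Decomposability: $\mathcal{T}$ is the least class containing $o(\top),o(\bot)$ ($o\in\mathcal{O}$) closed under arbitrary $\bigvee,\bigwedge$, with $[\![o(\top)]\!]=o(\{*\})$, $[\![o(\bot)]\!]=o(\emptyset)$. $t\trianglelefteq t'$ on $T\mathbf{1}$ iff $\forall\Phi\in\mathcal{T}$, $t\in[\![\Phi]\!]\Rightarrow t'\in[\![\Phi]\!]$; $r\preccurlyeq r'$ on $TT\mathbf{1}$ iff $\forall o\,\forall\Phi\in\mathcal{T}$, $r\in o([\![\Phi]\!])\Rightarrow r'\in o([\![\Phi]\!])$. $\mathcal{O}$ is decomposable if $r\preccurlyeq r'$ implies $\mu r\trianglelefteq\mu r'$. Similarity: $t\,\mathcal{O}(R)\,t'$ iff $\forall A\,\forall o$, $t\in o(A)\Rightarrow t'\in o(R[A])$ where $R[A]=\{y\mid\exists x\in A, xRy\}$. An applicative $\mathcal{O}$-simulation is a family $R^v_\tau\subseteq\mathit{Val}(\tau)^2$, $R^c_\tau\subseteq\mathit{Com}(\tau)^2$ with (1) $V R^v_{\mathbf{N}}W\Rightarrow V=W$; (2) $MR^c_\tau N\Rightarrow|M|\,\mathcal{O}(R^v_\tau)\,|N|$; (3) $VR^v_{\tau'\to\tau}W\Rightarrow\forall U\in\mathit{Val}(\tau')$, $VU\,R^c_\tau\,WU$; applicative $\mathcal{O}$-similarity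 is the union of all of them. Open extension / compatibility: $\Gamma\vdash M\,R^\circ\,N$ iff $M[\vec V/\vec x]\,R\,N[\vec V/\vec x]$ for all closed value instantiations of $\Gamma$; an open relation is compatible if it relates each variable to itself and is closed under every term constructor (terms built by the same constructor from related immediate subterms are related). *)

From Stdlib Require Import List Arith ClassicalEpsilon.
Import ListNotations.

Inductive ty : Type := TUnit | TNat | TArr (a b : ty).

(* arities: alpha^n -> alpha, N x alpha^n -> alpha, alpha^N -> alpha, N x alpha^N -> alpha *)
Inductive arity : Type := AFin (n : nat) | APFin (n : nat) | ACount | APCount.

Section Lang.
Variable Op : Type.
Variable ar : Op -> arity.

(* de Bruijn syntax; variable n refers to the n-th entry of the context *)
Inductive val : Type :=
  | VStar | VZ | VS (v : val) | VLam (t : ty) (M : comp) | VVar (n : nat)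
with comp : Type :=
  | CApp (v w : val)
  | CRet (v : val)
  | CLet (M N : comp)              (* let M => x in N ; N binds x *)
  | CFix (v : val)
  | CCase (v : val) (M N : comp)   (* case v of {Z => M; S(x) => N}; N binds x *)
  | COp (s : Op) (Ms : list comp)
  | COpP (s : Op) (v : val) (Ms : list comp)
  | COpC (s : Op) (v : val)
  | COpPC (s : Op) (v w : val).

Definition upren (xi : nat -> nat) : nat -> nat :=
  fun n => match n with 0 => 0 | S k => S (xi k) end.

Fixpoint ren_v (xi : nat -> nat) (v : val) : val :=
  match v with
  | VStar => VStar | VZ => VZ | VS v => VS (ren_v xi v)
  | VLam t M => VLam t (ren_c (upren xi) M)
  | VVar n => VVar (xi n)
  end
with ren_c (xi : nat -> nat) (M : comp) : comp :=
  match M with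
  | CApp v w => CApp (ren_v xi v) (ren_v xi w)
  | CRet v => CRet (ren_v xi v)
  | CLet M N => CLet (ren_c xi M) (ren_c (upren xi) N)
  | CFix v => CFix (ren_v xi v)
  | CCase v M N => CCase (ren_v xi v) (ren_c xi M) (ren_c (upren xi) N)
  | COp s Ms => COp s (map (ren_c xi) Ms)
  | COpP s v Ms => COpP s (ren_v xi v) (map (ren_c xi) Ms)
  | COpC s v => COpC s (ren_v xi v)
  | COpPC s v w => COpPC s (ren_v xi v) (ren_v xi w)
  end.

Definition upsub (sg : nat -> val) : nat -> val :=
  fun n => match n with 0 => VVar 0 | S k => ren_v S (sg k) end.

Fixpoint sub_v (sg : nat -> val) (v : val) : val :=
  match v with
  | VStar => VStar | VZ => VZ | VS v => VS (sub_v sg v)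
  | VLam t M => VLam t (sub_c (upsub sg) M)
  | VVar n => sg n
  end
with sub_c (sg : nat -> val) (M : comp) : comp :=
  match M with
  | CApp v w => CApp (sub_v sg v) (sub_v sg w)
  | CRet v => CRet (sub_v sg v)
  | CLet M N => CLet (sub_c sg M) (sub_c (upsub sg) N)
  | CFix v => CFix (sub_v sg v)
  | CCase v M N => CCase (sub_v sg v) (sub_c sg M) (sub_c (upsub sg) N)
  | COp s Ms => COp s (map (sub_c sg) Ms)
  | COpP s v Ms => COpP s (sub_v sg v) (map (sub_c sg) Ms)
  | COpC s v => COpC s (sub_v sg v)
  | COpPC s v w => COpPC s (sub_v sg v) (sub_v sg w)
  end.

Definition subst0 (M : comp) (V : val) : comp :=
  sub_c (fun n => match n with 0 => V | S k => VVar k end) M.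

Definition inst (sg : list val) : nat -> val := fun n => nth n sg (VVar n).

Inductive tyv : list ty -> val -> ty -> Prop :=
  | ty_star G : tyv G VStar TUnit
  | ty_zero G : tyv G VZ TNat
  | ty_succ G v : tyv G v TNat -> tyv G (VS v) TNat
  | ty_lam G t r M : tyc (t :: G) M r -> tyv G (VLam t M) (TArr t r)
  | ty_var G n t : nth_error G n = Some t -> tyv G (VVar n) t
with tyc : list ty -> comp -> ty -> Prop :=
  | ty_app G t r v w : tyv G v (TArr t r) -> tyv G w t -> tyc G (CApp v w) r
  | ty_ret G t v : tyv G v t -> tyc G (CRet v) t
  | ty_let G t r M N : tyc G M t -> tyc (t :: G) N r -> tyc G (CLet M N) r
  | ty_fix G t r v : tyv G v (TArr (TArr t r) (TArr t r)) -> tyc G (CFix v) (TArr t r)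
  | ty_case G t v M N : tyv G v TNat -> tyc G M t -> tyc (TNat :: G) N t ->
      tyc G (CCase v M N) t
  | ty_op G t s Ms : ar s = AFin (length Ms) -> (forall M, In M Ms -> tyc G M t) ->
      tyc G (COp s Ms) t
  | ty_opP G t s v Ms : ar s = APFin (length Ms) -> tyv G v TNat ->
      (forall M, In M Ms -> tyc G M t) -> tyc G (COpP s v Ms) t
  | ty_opC G t s v : ar s = ACount -> tyv G v (TArr TNat t) -> tyc G (COpC s v) t
  | ty_opPC G t s v w : ar s = APCount -> tyv G v TNat -> tyv G w (TArr TNat t) ->
      tyc G (COpPC s v w) t.

(* a path is the list of child indices from the root; LAbs = position not in the tree *)
Inductive label (X : Type) : Type :=
  | LAbs | LBot | LLeaf (x : X) | LNode (s : Op) (m : option nat).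
Arguments LAbs {X}. Arguments LBot {X}. Arguments LLeaf {X} x. Arguments LNode {X} s m.

Definition rtree (X : Type) : Type := list nat -> label X.

Definition nchildren (s : Op) : option nat :=
  match ar s with AFin n | APFin n => Some n | _ => None end.
Definition is_param (s : Op) : bool :=
  match ar s with APFin _ | APCount => true | _ => false end.
Definition valid_child (s : Op) (i : nat) : bool :=
  match nchildren s with Some n => i <? n | None => true end.

(* well-formed trees whose leaves satisfy P; T X corresponds to wf (fun _ => True) *)
Definition wf {X : Type} (P : X -> Prop) (t : rtree X) : Prop :=
  t [] <> LAbs /\
  (forall p i, t (p ++ [i]) <> LAbs <->
      exists s m, t p = LNode s m /\ valid_child s i = true) /\
  (forall p s m, t p = LNode s m -> (is_param s = true <-> m <> None)) /\
  (forall p x, t p = LLeaf x -> P x).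

Definition wfT {X : Type} (t : rtree X) : Prop := wf (fun _ => True) t.

(* t <= t' : t arises from t' by replacing subtrees with bottom *)
Definition tle_cpo {X : Type} (t t' : rtree X) : Prop :=
  forall p, t p = t' p \/ t p = LBot \/ t p = LAbs.

Definition is_lub {X : Type} (c : nat -> rtree X) (t : rtree X) : Prop :=
  (forall n, tle_cpo (c n) t) /\
  (forall u, wfT u -> (forall n, tle_cpo (c n) u) -> tle_cpo t u).

Fixpoint flat_go {X : Type} (r : rtree (rtree X)) (q p : list nat) : label X :=
  match r q with
  | LAbs => LAbs
  | LBot => match p with [] => LBot | _ => LAbs end
  | LLeaf t => t p
  | LNode s m => match p with [] => LNode s m | i :: p' => flat_go r (q ++ [i]) p' end
  end.
Definition flatten {X : Type} (r : rtree (rtree X)) : rtree X := fun p => flat_go r [] p.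

Definition restrict {X : Type} (P : X -> Prop) (t : rtree X) : rtree unit :=
  fun p => match t p with
           | LAbs => LAbs | LBot => LBot | LNode s m => LNode s m
           | LLeaf x => if excluded_middle_informative (P x) then LLeaf tt else LBot
           end.

(* supremum of an ascending chain of labels (classically) *)
Definition lsup {X : Type} (c : nat -> label X) : label X :=
  match excluded_middle_informative (exists n, c n <> LAbs /\ c n <> LBot) with
  | left H => c (proj1_sig (constructive_indefinite_description _ H))
  | right _ => if excluded_middle_informative (exists n, c n = LBot) then LBot else LAbs
  end.

Fixpoint num (n : nat) : val := match n with 0 => VZ | S k => VS (num k) end.
Fixpoint val_num (v : val) : option nat :=
  match v with VZ => Some 0 | VS w => option_map S (val_num w) | _ => None end.

Definition bot_at {X : Type} (p : list nat) : label X :=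
  match p with [] => LBot | _ => LAbs end.

Fixpoint approx (n : nat) (K : list comp) (M : comp) (p : list nat) : label val :=
  match n with
  | 0 => bot_at p
  | S n =>
    match M with
    | CRet V => match K with
                | [] => match p with [] => LLeaf V | _ => LAbs end
                | N :: K' => approx n K' (subst0 N V) p
                end
    | CApp (VLam _ B) V => approx n K (subst0 B V) p
    | CApp _ _ => bot_at p
    | CLet M1 N => approx n (N :: K) M1 p
    | CFix V =>
        (* fix(F) -> F (\z. let fix(F) => y in y z) *)
        match V with
        | VLam (TArr a _) _ =>
            approx n K (CApp V (VLam a (CLet (CFix (ren_v S V)) (CApp (VVar 0) (VVar 1))))) p
        | _ => bot_at p
        end
    | CCase V M1 N1 => match V with
                       | VZ => approx n K M1 p
                       | VS W => approx n K (subst0 N1 W) p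
                       | _ => bot_at p
                       end
    | COp s Ms => match p with
                  | [] => LNode s None
                  | i :: p' => if valid_child s i then approx n K (nth i Ms (CRet VStar)) p'
                               else LAbs
                  end
    | COpP s V Ms => match val_num V with
                     | Some m => match p with
                                 | [] => LNode s (Some m)
                                 | i :: p' => if valid_child s i
                                              then approx n K (nth i Ms (CRet VStar)) p'
                                              else LAbs
                                 end
                     | None => bot_at p
                     end
    | COpC s V => match p with
                  | [] => LNode s None
                  | i :: p' => if valid_child s i then approx n K (CApp V (num i)) p' else LAbs
                  end
    | COpPC s V W => match val_num V with
                     | Some m => match p with
                                 | [] => LNode s (Some m)
                                 | i :: p' => if valid_child s i
                                              then approx n K (CApp W (num i)) p'
                                              else LAbs
                                 end
                     | None => bot_at p
                     end
    end
  end.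

Definition optree (M : comp) : rtree val := fun p => lsup (fun n => approx n [] M p).

Section Modalities.
Variable O : Type.
Variable sem : O -> rtree unit -> Prop.

Definition scott_open (U : rtree unit -> Prop) : Prop :=
  (forall t t', wfT t -> wfT t' -> tle_cpo t t' -> U t -> U t') /\
  (forall (c : nat -> rtree unit) t,
      (forall n, wfT (c n)) -> (forall n, tle_cpo (c n) (c (S n))) ->
      wfT t -> is_lub c t -> U t -> exists n, U (c n)).

Definition modal {X : Type} (o : O) (A : X -> Prop) (t : rtree X) : Prop :=
  sem o (restrict A t).

Inductive form : Type :=
  | FTop (o : O) | FBot (o : O)
  | FOr (J : Type) (f : J -> form) | FAnd (J : Type) (f : J -> form).

Fixpoint sem_form (F : form) : rtree unit -> Prop :=
  match F with
  | FTop o => modal o (fun _ : unit => True)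
  | FBot o => modal o (fun _ : unit => False)
  | FOr J f => fun t => exists i, sem_form (f i) t
  | FAnd J f => fun t => forall i, sem_form (f i) t
  end.

Definition tri_le (t t' : rtree unit) : Prop :=
  forall F, sem_form F t -> sem_form F t'.
Definition curly_le (r r' : rtree (rtree unit)) : Prop :=
  forall o F, modal o (sem_form F) r -> modal o (sem_form F) r'.

Definition decomposable : Prop :=
  forall r r' : rtree (rtree unit), wf wfT r -> wf wfT r' ->
    curly_le r r' -> tri_le (flatten r) (flatten r').

(* relator O(R), for R a relation on the subset D *)
Definition tsim {X Y : Type} (D : X -> Prop) (R : X -> Y -> Prop) (t : rtree X) (t' : rtree Y) :=
  forall (A : X -> Prop), (forall x, A x -> D x) ->
    forall o, modal o A t -> modal o (fun y => exists x, A x /\ R x y) t'.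

Record simulation (Rv : ty -> val -> val -> Prop) (Rc : ty -> comp -> comp -> Prop) : Prop := {
  sim_tyv : forall t V W, Rv t V W -> tyv [] V t /\ tyv [] W t;
  sim_tyc : forall t M N, Rc t M N -> tyc [] M t /\ tyc [] N t;
  sim_nat : forall V W, Rv TNat V W -> V = W;
  sim_comp : forall t M N, Rc t M N -> tsim (fun V => tyv [] V t) (Rv t) (optree M) (optree N);
  sim_app : forall t' t V W, Rv (TArr t' t) V W ->
              forall U, tyv [] U t' -> Rc t (CApp V U) (CApp W U) }.

Definition simv (t : ty) (V W : val) : Prop :=
  exists Rv Rc, simulation Rv Rc /\ Rv t V W.
Definition simc (t : ty) (M N : comp) : Prop :=
  exists Rv Rc, simulation Rv Rc /\ Rc t M N.

End Modalities.

Definition openv (R : ty -> val -> val -> Prop) (G : list ty) (t : ty) (V W : val) : Prop :=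
  tyv G V t /\ tyv G W t /\
  forall sg : list val, Forall2 (fun U a => tyv [] U a) sg G ->
    R t (sub_v (inst sg) V) (sub_v (inst sg) W).
Definition openc (R : ty -> comp -> comp -> Prop) (G : list ty) (t : ty) (M N : comp) : Prop :=
  tyc G M t /\ tyc G N t /\
  forall sg : list val, Forall2 (fun U a => tyv [] U a) sg G ->
    R t (sub_c (inst sg) M) (sub_c (inst sg) N).

Record compatible (Ov : list ty -> ty -> val -> val -> Prop)
                  (Oc : list ty -> ty -> comp -> comp -> Prop) : Prop := {
  c_var : forall G n t, nth_error G n = Some t -> Ov G t (VVar n) (VVar n);
  c_star : forall G, Ov G TUnit VStar VStar;
  c_zero : forall G, Ov G TNat VZ VZ;
  c_succ : forall G V W, Ov G TNat V W -> Ov G TNat (VS V) (VS W);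
  c_lam : forall G t r M N, Oc (t :: G) r M N -> Ov G (TArr t r) (VLam t M) (VLam t N);
  c_app : forall G t r V V' W W', Ov G (TArr t r) V V' -> Ov G t W W' ->
            Oc G r (CApp V W) (CApp V' W');
  c_ret : forall G t V W, Ov G t V W -> Oc G t (CRet V) (CRet W);
  c_let : forall G t r M M' N N', Oc G t M M' -> Oc (t :: G) r N N' ->
            Oc G r (CLet M N) (CLet M' N');
  c_fix : forall G t r V W, Ov G (TArr (TArr t r) (TArr t r)) V W ->
            Oc G (TArr t r) (CFix V) (CFix W);
  c_case : forall G t V W M M' N N', Ov G TNat V W -> Oc G t M M' ->
            Oc (TNat :: G) t N N' -> Oc G t (CCase V M N) (CCase W M' N');
  c_op : forall G t s Ms Ns, ar s = AFin (length Ms) -> Forall2 (Oc G t) Ms Ns ->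
            Oc G t (COp s Ms) (COp s Ns);
  c_opP : forall G t s V W Ms Ns, ar s = APFin (length Ms) -> Ov G TNat V W ->
            Forall2 (Oc G t) Ms Ns -> Oc G t (COpP s V Ms) (COpP s W Ns);
  c_opC : forall G t s V W, ar s = ACount -> Ov G (TArr TNat t) V W ->
            Oc G t (COpC s V) (COpC s W);
  c_opPC : forall G t s V V' W W', ar s = APCount -> Ov G TNat V V' ->
            Ov G (TArr TNat t) W W' -> Oc G t (COpPC s V W) (COpPC s V' W') }.

End Lang.

(** Howe's method.  Let [H] be the Howe closure of open similarity: the least
    relation [M H N] obtained by relating the immediate subterms of [M] by [H]
    and then composing with open similarity.  By construction [H] is
    compatible, contains open similarity and is stable under substituting
    [H]-related values.  The crux is that closed [H] is an applicative
    simulation, so that [H] is contained in open similarity and the latter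
    inherits compatibility.  For this one shows, by induction on [n], that the
    [n]-th approximant of [|M|] is related to [|N|] by the relator [O(H)];
    Scott openness reduces the relator on [|M|] to a finite approximant.  For
    an effect operation, and for [let M => x in N], the effect tree is the
    flattening [mu] of a tree of trees, and decomposability is exactly what
    carries the relator through [mu]. *)

From Stdlib Require Import List Arith Lia FunctionalExtensionality ClassicalEpsilon.
Import ListNotations.

Arguments VStar {Op}. Arguments VZ {Op}. Arguments VS {Op}. Arguments VLam {Op}.
Arguments VVar {Op}. Arguments CApp {Op}. Arguments CRet {Op}. Arguments CLet {Op}.
Arguments CFix {Op}. Arguments CCase {Op}. Arguments COp {Op}. Arguments COpP {Op}.
Arguments COpC {Op}. Arguments COpPC {Op}.
Arguments ren_v {Op}. Arguments ren_c {Op}. Arguments sub_v {Op}. Arguments sub_c {Op}.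
Arguments upsub {Op}. Arguments subst0 {Op}. Arguments inst {Op}. Arguments num {Op}.
Arguments val_num {Op}. Arguments tyv {Op}. Arguments tyc {Op}.
Arguments LAbs {Op X}. Arguments LBot {Op X}. Arguments LLeaf {Op X}. Arguments LNode {Op X}.
Arguments bot_at {Op X}. Arguments flatten {Op X}. Arguments restrict {Op X}.
Arguments tle_cpo {Op X}. Arguments lsup {Op X}. Arguments flat_go {Op X}.
Arguments approx {Op} ar. Arguments optree {Op} ar.

Scheme tyv_mind := Induction for tyv Sort Prop with tyc_mind := Induction for tyc Sort Prop.
Combined Scheme typing_ind from tyv_mind, tyc_mind.

Section HoweMethod.

Variable Op : Type.
Variable ar : Op -> arity.

Notation val := (val Op). Notation comp := (comp Op).
Notation tyv := (tyv ar). Notation tyc := (tyc ar).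
Notation rtree := (rtree Op).
Notation wf := (wf Op ar). Notation wfT := (wfT Op ar).
Notation valid_child := (valid_child Op ar).
Notation is_param := (is_param Op ar).
Notation approx := (approx ar). Notation optree := (optree ar).

(** * Syntax and substitution *)

Section TermInduction.

Variables (Pv : val -> Prop) (Pc : comp -> Prop).
Hypotheses
  (h_star : Pv VStar) (h_z : Pv VZ) (h_s : forall v, Pv v -> Pv (VS v))
  (h_lam : forall t M, Pc M -> Pv (VLam t M)) (h_var : forall n, Pv (VVar n))
  (h_app : forall v w, Pv v -> Pv w -> Pc (CApp v w))
  (h_ret : forall v, Pv v -> Pc (CRet v))
  (h_let : forall M N, Pc M -> Pc N -> Pc (CLet M N))
  (h_fix : forall v, Pv v -> Pc (CFix v))
  (h_case : forall v M N, Pv v -> Pc M -> Pc N -> Pc (CCase v M N))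
  (h_op : forall s Ms, Forall Pc Ms -> Pc (COp s Ms))
  (h_opP : forall s v Ms, Pv v -> Forall Pc Ms -> Pc (COpP s v Ms))
  (h_opC : forall s v, Pv v -> Pc (COpC s v))
  (h_opPC : forall s v w, Pv v -> Pv w -> Pc (COpPC s v w)).

Fixpoint val_ind' (v : val) : Pv v :=
  match v with
  | VStar => h_star | VZ => h_z | VS v => h_s v (val_ind' v)
  | VLam t M => h_lam t M (comp_ind' M) | VVar n => h_var n
  end
with comp_ind' (M : comp) : Pc M :=
  match M with
  | CApp v w => h_app v w (val_ind' v) (val_ind' w)
  | CRet v => h_ret v (val_ind' v)
  | CLet M N => h_let M N (comp_ind' M) (comp_ind' N)
  | CFix v => h_fix v (val_ind' v)
  | CCase v M N => h_case v M N (val_ind' v) (comp_ind' M) (comp_ind' N)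
  | COp s Ms => h_op s Ms ((fix go l : Forall Pc l :=
        match l with [] => Forall_nil _ | x :: l => Forall_cons _ (comp_ind' x) (go l) end) Ms)
  | COpP s v Ms => h_opP s v Ms (val_ind' v) ((fix go l : Forall Pc l :=
        match l with [] => Forall_nil _ | x :: l => Forall_cons _ (comp_ind' x) (go l) end) Ms)
  | COpC s v => h_opC s v (val_ind' v)
  | COpPC s v w => h_opPC s v w (val_ind' v) (val_ind' w)
  end.

Lemma term_ind : (forall v, Pv v) /\ (forall M, Pc M).
Proof. split; [exact val_ind' | exact comp_ind']. Qed.

End TermInduction.

Ltac map_ext_forall :=
  rewrite ?map_map; apply map_ext_in; intros ? Hin;
  match goal with H : Forall _ _ |- _ => rewrite Forall_forall in H; specialize (H _ Hin) end.

Ltac subst_lemma_by_ind U := apply term_ind; intros; simpl; f_equal; auto;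
  try (match goal with H : forall _ _, _ = _ |- _ => rewrite H; rewrite ?U; reflexivity end);
  try (map_ext_forall; auto).

Lemma ren_ren :
  (forall (v : val) xi1 xi2, ren_v xi2 (ren_v xi1 v) = ren_v (fun n => xi2 (xi1 n)) v) /\
  (forall (M : comp) xi1 xi2, ren_c xi2 (ren_c xi1 M) = ren_c (fun n => xi2 (xi1 n)) M).
Proof.
  assert (U : forall xi1 xi2 : nat -> nat,
    (fun n => upren xi2 (upren xi1 n)) = upren (fun n => xi2 (xi1 n))).
  { intros; extensionality n; destruct n; reflexivity. }
  subst_lemma_by_ind U.
Qed.

Lemma sub_ren :
  (forall (v : val) xi s, sub_v s (ren_v xi v) = sub_v (fun n => s (xi n)) v) /\
  (forall (M : comp) xi s, sub_c s (ren_c xi M) = sub_c (fun n => s (xi n)) M).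
Proof.
  assert (U : forall xi (s : nat -> val),
    (fun n => upsub s (upren xi n)) = upsub (fun n => s (xi n))).
  { intros; extensionality n; destruct n; reflexivity. }
  subst_lemma_by_ind U.
Qed.

Lemma ren_sub :
  (forall (v : val) xi s, ren_v xi (sub_v s v) = sub_v (fun n => ren_v xi (s n)) v) /\
  (forall (M : comp) xi s, ren_c xi (sub_c s M) = sub_c (fun n => ren_v xi (s n)) M).
Proof.
  assert (U : forall xi (s : nat -> val),
    (fun n => ren_v (upren xi) (upsub s n)) = upsub (fun n => ren_v xi (s n))).
  { intros; extensionality n; destruct n; simpl; try reflexivity.
    rewrite !(proj1 ren_ren). reflexivity. }
  subst_lemma_by_ind U.
Qed.

Lemma sub_sub :
  (forall (v : val) s1 s2, sub_v s2 (sub_v s1 v) = sub_v (fun n => sub_v s2 (s1 n)) v) /\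
  (forall (M : comp) s1 s2, sub_c s2 (sub_c s1 M) = sub_c (fun n => sub_v s2 (s1 n)) M).
Proof.
  assert (U : forall (s1 s2 : nat -> val),
    (fun n => sub_v (upsub s2) (upsub s1 n)) = upsub (fun n => sub_v s2 (s1 n))).
  { intros; extensionality n; destruct n; simpl; try reflexivity.
    rewrite (proj1 sub_ren), (proj1 ren_sub). reflexivity. }
  subst_lemma_by_ind U.
Qed.

Lemma sub_id :
  (forall v : val, sub_v VVar v = v) /\ (forall M : comp, sub_c VVar M = M).
Proof.
  assert (U : upsub (@VVar Op) = VVar).
  { extensionality n; destruct n; reflexivity. }
  apply term_ind; intros; simpl; f_equal; rewrite ?U; auto;
  transitivity (map (fun x => x) Ms); auto using map_id;
  apply map_ext_in; intros ? Hin; rewrite Forall_forall in *; auto.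
Qed.

Lemma ren_as_sub :
  (forall (v : val) xi, ren_v xi v = sub_v (fun n => VVar (xi n)) v) /\
  (forall (M : comp) xi, ren_c xi M = sub_c (fun n => VVar (xi n)) M).
Proof.
  assert (U : forall xi, upsub (fun n => @VVar Op (xi n)) = fun n => VVar (upren xi n)).
  { intros; extensionality n; destruct n; reflexivity. }
  apply term_ind; intros; simpl; f_equal; rewrite ?U; auto; map_ext_forall; auto.
Qed.

Definition scons (V : val) (s : nat -> val) : nat -> val :=
  fun n => match n with 0 => V | S k => s k end.

Lemma subst0_scons M V : subst0 M V = sub_c (scons V VVar) M.
Proof. reflexivity. Qed.


(** * Typing under renaming and substitution *)

Definition ren_typed (G D : list ty) (xi : nat -> nat) :=
  forall n a, nth_error G n = Some a -> nth_error D (xi n) = Some a.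
Definition sub_typed (G D : list ty) (s : nat -> val) :=
  forall n a, nth_error G n = Some a -> tyv D (s n) a.

Lemma ren_typed_up G D xi t : ren_typed G D xi -> ren_typed (t :: G) (t :: D) (upren xi).
Proof. intros H [|n] a; simpl; auto. Qed.

Ltac list_premise :=
  match goal with
  | |- ar _ = _ => rewrite length_map; assumption
  | H : In _ (map _ _) |- _ => apply in_map_iff in H; destruct H as [? [<- ?]]; eauto
  end.

Lemma typing_ren :
  (forall G v t, tyv G v t -> forall D xi, ren_typed G D xi -> tyv D (ren_v xi v) t) /\
  (forall G M t, tyc G M t -> forall D xi, ren_typed G D xi -> tyc D (ren_c xi M) t).
Proof.
  apply (typing_ind Op ar
    (fun G v t _ => forall D xi, ren_typed G D xi -> tyv D (ren_v xi v) t)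
    (fun G M t _ => forall D xi, ren_typed G D xi -> tyc D (ren_c xi M) t));
  intros; simpl; econstructor; eauto using ren_typed_up; intros; try list_premise.
Qed.

Lemma sub_typed_up G D s t : sub_typed G D s -> sub_typed (t :: G) (t :: D) (upsub s).
Proof.
  intros H [|n] a; simpl; intros E.
  - constructor. simpl. auto.
  - eapply (proj1 typing_ren); eauto. intros k b; simpl; auto.
Qed.

Lemma typing_sub :
  (forall G v t, tyv G v t -> forall D s, sub_typed G D s -> tyv D (sub_v s v) t) /\
  (forall G M t, tyc G M t -> forall D s, sub_typed G D s -> tyc D (sub_c s M) t).
Proof.
  apply (typing_ind Op ar
    (fun G v t _ => forall D s, sub_typed G D s -> tyv D (sub_v s v) t)
    (fun G M t _ => forall D s, sub_typed G D s -> tyc D (sub_c s M) t));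
  intros; simpl; try (econstructor; eauto using sub_typed_up; intros; try list_premise; fail).
  auto.
Qed.

Definition agree_below (k : nat) (s s' : nat -> val) := forall n, n < k -> s n = s' n.

Lemma agree_below_up k s s' : agree_below k s s' -> agree_below (S k) (upsub s) (upsub s').
Proof. intros H [|n] Hn; simpl; auto. rewrite H; auto; lia. Qed.

Lemma sub_typed_agree :
  (forall G v t, tyv G v t ->
     forall s s', agree_below (length G) s s' -> sub_v s v = sub_v s' v) /\
  (forall G M t, tyc G M t ->
     forall s s', agree_below (length G) s s' -> sub_c s M = sub_c s' M).
Proof.
  apply (typing_ind Op ar
    (fun G v t _ => forall s s', agree_below (length G) s s' -> sub_v s v = sub_v s' v)
    (fun G M t _ => forall s s', agree_below (length G) s s' -> sub_c s M = sub_c s' M));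
  intros; simpl; f_equal; eauto using agree_below_up;
  try (apply map_ext_in; intros; eauto).
  intros _. apply H. apply nth_error_Some. congruence.
Qed.

Lemma sub_v_closed v t s : tyv [] v t -> sub_v s v = v.
Proof.
  intros H. rewrite ((proj1 sub_typed_agree) _ _ _ H s VVar). apply (proj1 sub_id).
  intros n Hn; simpl in Hn; lia.
Qed.

Lemma ren_v_closed v t xi : tyv [] v t -> ren_v xi v = v.
Proof. intros H. rewrite (proj1 ren_as_sub). eapply sub_v_closed; eauto. Qed.

Lemma typing_subst0 G a N t V : tyc (a :: G) N t -> tyv G V a -> tyc G (subst0 N V) t.
Proof.
  intros H1 H2. eapply (proj2 typing_sub); eauto.
  intros [|n] b E; simpl in *. congruence. constructor; auto.
Qed.

Lemma tyv_closed_weaken v t G : tyv [] v t -> tyv G v t.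
Proof.
  intros H. rewrite <- (ren_v_closed v t (fun n => n) H).
  eapply (proj1 typing_ren); eauto. intros n a E; destruct n; discriminate.
Qed.

Lemma tyv_num n : tyv [] (num n) TNat.
Proof. induction n; simpl; constructor; auto. Qed.

Lemma tyv_arr_lam V a b : tyv [] V (TArr a b) -> exists B, V = VLam a B.
Proof. intros H; inversion H; subst; eauto. destruct n; discriminate. Qed.

(** * Effect trees *)

Definition tree_map {X Y} (f : X -> Y) (t : rtree X) : rtree Y :=
  fun p => match t p with
           | LAbs => LAbs | LBot => LBot | LLeaf x => LLeaf (f x) | LNode s m => LNode s m
           end.

Definition label_le {X} (l l' : label Op X) := l = l' \/ l = LBot \/ l = LAbs.

Lemma label_le_refl {X} (l : label Op X) : label_le l l.
Proof. left; auto. Qed.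

Lemma label_le_trans {X} (a b c : label Op X) : label_le a b -> label_le b c -> label_le a c.
Proof. unfold label_le; intros [ -> | [ -> | -> ] ] H; auto. Qed.

Lemma label_le_bot_at {X} p (l : label Op X) : label_le (bot_at p) l.
Proof. destruct p; unfold label_le; simpl; auto. Qed.

Lemma label_le_proper {X} (a b : label Op X) :
  label_le a b -> a <> LBot -> a <> LAbs -> b = a.
Proof. unfold label_le; intros [ -> | [ -> | -> ] ]; congruence. Qed.

Lemma restrict_ext {X} (A B : X -> Prop) (t : rtree X) :
  (forall x, A x <-> B x) -> restrict A t = restrict B t.
Proof.
  intros H; extensionality p; unfold restrict; destruct (t p); auto.
  destruct (excluded_middle_informative (A x)), (excluded_middle_informative (B x)); firstorder.
Qed.

Lemma restrict_abs {X} (A : X -> Prop) (t : rtree X) p :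
  restrict A t p = LAbs <-> t p = LAbs.
Proof.
  unfold restrict; destruct (t p); try (split; congruence).
  destruct (excluded_middle_informative (A x)); split; congruence.
Qed.

Lemma restrict_node {X} (A : X -> Prop) (t : rtree X) p s m :
  restrict A t p = LNode s m <-> t p = LNode s m.
Proof.
  unfold restrict; destruct (t p); try (split; congruence).
  destruct (excluded_middle_informative (A x)); split; congruence.
Qed.

Lemma restrict_True (t : rtree unit) : restrict (fun _ => True) t = t.
Proof.
  extensionality p. unfold restrict. destruct (t p); auto. destruct x.
  destruct (excluded_middle_informative True); tauto.
Qed.

Lemma restrict_False_restrict {X} (A : X -> Prop) (t : rtree X) :
  restrict (fun _ => False) (restrict A t) = restrict (fun _ => False) t.
Proof.
  extensionality p. unfold restrict. destruct (t p); auto.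
  destruct (excluded_middle_informative (A x)); auto;
  destruct (excluded_middle_informative False); tauto.
Qed.

Lemma restrict_tree_map {X Y} (f : X -> Y) A (t : rtree X) :
  restrict A (tree_map f t) = restrict (fun x => A (f x)) t.
Proof. extensionality p. unfold restrict, tree_map. destruct (t p); reflexivity. Qed.

Lemma restrict_tle {X} (A : X -> Prop) (t t' : rtree X) :
  tle_cpo t t' -> tle_cpo (restrict A t) (restrict A t').
Proof. intros L p. unfold restrict. destruct (L p) as [E|[E|E]]; rewrite E; auto. Qed.

Lemma restrict_at {X} (A : X -> Prop) (t t' : rtree X) p :
  t p = t' p -> restrict A t p = restrict A t' p.
Proof. intros E. unfold restrict. rewrite E. auto. Qed.

Lemma restrict_on_support {X} (D A : X -> Prop) (t : rtree X) :
  wf D t -> restrict A t = restrict (fun x => A x /\ D x) t.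
Proof.
  intros (_ & _ & _ & H). extensionality p. unfold restrict.
  destruct (t p) eqn:E; auto. specialize (H _ _ E).
  destruct (excluded_middle_informative (A x)),
           (excluded_middle_informative (A x /\ D x)); tauto.
Qed.

Lemma wf_weaken {X} (P Q : X -> Prop) (t : rtree X) :
  wf P t -> (forall x, P x -> Q x) -> wf Q t.
Proof. intros (H1 & H2 & H3 & H4) H; split; [|split; [|split]]; auto. intros; eauto. Qed.

Lemma wfT_of_wf {X} (P : X -> Prop) (t : rtree X) : wf P t -> wfT t.
Proof. intros H; eapply wf_weaken; eauto. Qed.

Lemma wfT_restrict {X} (P : X -> Prop) A (t : rtree X) : wf P t -> wfT (restrict A t).
Proof.
  intros (H1 & H2 & H3 & H4); split; [|split; [|split]].
  - rewrite restrict_abs; auto.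
  - intros p i. rewrite restrict_abs, H2.
    split; intros (s & m & E & V); exists s, m; split; auto; apply (restrict_node A); auto.
  - intros p s m E. apply restrict_node in E. eapply H3; eauto.
  - auto.
Qed.

Lemma wf_tree_map {X Y} (P : X -> Prop) (Q : Y -> Prop) (f : X -> Y) (t : rtree X) :
  wf P t -> (forall x, P x -> Q (f x)) -> wf Q (tree_map f t).
Proof.
  intros (H1 & H2 & H3 & H4) HQ.
  assert (A1 : forall p, tree_map f t p = LAbs <-> t p = LAbs).
  { intros p; unfold tree_map; destruct (t p); split; congruence. }
  assert (A2 : forall p s m, tree_map f t p = LNode s m <-> t p = LNode s m).
  { intros p s0 m0; unfold tree_map; destruct (t p); split; congruence. }
  split; [|split; [|split]].
  - rewrite A1; auto.
  - intros p i. rewrite A1, H2.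
    split; intros (s0 & m0 & E & V); exists s0, m0; split; auto; apply A2; auto.
  - intros p s0 m0 E. apply A2 in E. eapply H3; eauto.
  - intros p y E. unfold tree_map in E. destruct (t p) eqn:E1; try discriminate.
    injection E; intros; subst. eauto.
Qed.

Lemma restrict_flat_go {X} (A : X -> Prop) (r : rtree (rtree X)) p q :
  restrict A (fun p => flat_go r q p) p = flat_go (tree_map (restrict A) r) q p.
Proof.
  revert q; induction p as [|i p IH]; intros q; unfold restrict, tree_map in *; simpl;
  destruct (r q); auto.
  all: rewrite <- IH; reflexivity.
Qed.

Lemma restrict_flatten {X} (A : X -> Prop) (r : rtree (rtree X)) :
  restrict A (flatten r) = flatten (tree_map (restrict A) r).
Proof. extensionality p. apply restrict_flat_go. Qed.

Section FlattenWellFormed.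

Variables (X : Type) (P : X -> Prop) (r : rtree (rtree X)).
Hypothesis wf_r : wf (wf P) r.

Lemma flat_go_root q : r q <> LAbs -> flat_go r q [] <> LAbs.
Proof.
  destruct wf_r as (_ & _ & _ & H4). intros Hq; simpl.
  destruct (r q) eqn:E; try congruence. destruct (H4 _ _ E) as (T1 & _); auto.
Qed.

Lemma flat_go_children p q i :
  flat_go r q (p ++ [i]) <> LAbs <->
  exists s m, flat_go r q p = LNode s m /\ valid_child s i = true.
Proof.
  destruct wf_r as (_ & H2 & _ & H4).
  revert q; induction p as [|j p IH]; intros q; simpl;
  destruct (r q) as [| |t|s0 m0] eqn:E;
  try (split; [congruence | intros (? & ? & ? & ?); congruence]);
  try (destruct (H4 _ _ E) as (_ & T2 & _); first [apply (T2 []) | apply (T2 (j :: p))]);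
  [|apply IH].
  split.
  - intros Z. exists s0, m0; split; auto.
    assert (Z2 : r (q ++ [i]) <> LAbs) by (intros Z3; simpl in Z; rewrite Z3 in Z; auto).
    apply H2 in Z2. destruct Z2 as (s' & m' & E' & V). congruence.
  - intros (s & m' & E' & V). injection E'; intros; subst.
    apply flat_go_root. apply H2. eauto.
Qed.

Lemma flat_go_param p q s m :
  flat_go r q p = LNode s m -> (is_param s = true <-> m <> None).
Proof.
  destruct wf_r as (_ & _ & H3 & H4).
  revert q; induction p as [|j p IH]; intros q; simpl; destruct (r q) eqn:E; try congruence;
  try (destruct (H4 _ _ E) as (_ & _ & T3 & _); apply T3).
  - intros Z; injection Z; intros; subst. eapply H3; eauto.
  - apply IH.
Qed.

Lemma flat_go_leaf p q x : flat_go r q p = LLeaf x -> P x.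
Proof.
  destruct wf_r as (_ & _ & _ & H4).
  revert q; induction p as [|j p IH]; intros q; simpl; destruct (r q) eqn:E; try congruence;
  try (destruct p; congruence);
  try (destruct (H4 _ _ E) as (_ & _ & _ & T4); apply T4).
  apply IH.
Qed.

Lemma wf_flatten : wf P (flatten r).
Proof.
  split; [|split; [|split]]; unfold flatten.
  - apply flat_go_root. apply wf_r.
  - intros p i. apply flat_go_children.
  - intros p s m. apply flat_go_param.
  - intros p x. apply flat_go_leaf.
Qed.

End FlattenWellFormed.

Definition label_tree_le {X} (l l' : label Op (rtree X)) :=
  l = l' \/ l = LBot \/ l = LAbs \/
  exists t t', l = LLeaf t /\ l' = LLeaf t' /\ tle_cpo t t'.

Lemma flat_go_mono {X} (r r' : rtree (rtree X)) :
  (forall q, label_tree_le (r q) (r' q)) ->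
  forall p q, label_le (flat_go r q p) (flat_go r' q p).
Proof.
  intros H p; induction p as [|i p IH]; intros q; simpl;
  destruct (H q) as [E|[E|[E|(t & t' & E & E' & L)]]]; rewrite ?E.
  all: try (destruct (r' q); unfold label_le; auto; try apply IH; fail).
  all: try (unfold label_le; auto; fail).
  all: rewrite E'; apply L.
Qed.

Lemma tree_map_label_tree_le {X Y} (f : X -> rtree Y) (t t' : rtree X) :
  tle_cpo t t' -> forall q, label_tree_le (tree_map f t q) (tree_map f t' q).
Proof.
  intros H q. unfold tree_map, label_tree_le. destruct (H q) as [E|[E|E]]; rewrite E; auto.
Qed.

Lemma flatten_tree_map_mono {X Y} (f g : X -> rtree Y) (t : rtree X) :
  (forall x, tle_cpo (f x) (g x)) ->
  tle_cpo (flatten (tree_map f t)) (flatten (tree_map g t)).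
Proof.
  intros H p. apply flat_go_mono. intros q. unfold tree_map, label_tree_le.
  destruct (t q); auto. right; right; right; eauto.
Qed.

Lemma flat_go_shift {X} (r : rtree (rtree X)) q0 p q :
  flat_go r (q0 ++ q) p = flat_go (fun q' => r (q0 ++ q')) q p.
Proof.
  revert q; induction p as [|i p IH]; intros q; simpl; destruct (r (q0 ++ q)); auto.
  rewrite <- app_assoc. apply IH.
Qed.

Lemma flat_go_cons {X} (r : rtree (rtree X)) i p :
  flat_go r [i] p = flat_go (fun q => r (i :: q)) [] p.
Proof. exact (flat_go_shift r [i] p []). Qed.

Lemma flat_go_ext {X} (r r' : rtree (rtree X)) :
  (forall q, r q = r' q) -> forall q p, flat_go r q p = flat_go r' q p.
Proof. intros H. replace r with r'; auto. extensionality q; auto. Qed.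

Lemma flat_go_abs {X} (r : rtree (rtree X)) q p : r q = LAbs -> flat_go r q p = LAbs.
Proof. intros H; destruct p; simpl; rewrite H; auto. Qed.

Definition bot_tree {X} : rtree X := fun p => bot_at p.

Definition leaf_tree {X} (x : X) : rtree X :=
  fun p => match p with [] => LLeaf x | _ => LAbs end.

Definition node_tree {X} (s : Op) (m : option nat) (f : nat -> X) : rtree X :=
  fun p => match p with
           | [] => LNode s m
           | [i] => if valid_child s i then LLeaf (f i) else LAbs
           | _ => LAbs
           end.

Lemma wf_bot_tree {X} (P : X -> Prop) : wf P bot_tree.
Proof.
  unfold bot_tree, bot_at; split; [|split; [|split]].
  - congruence.
  - intros p i; split.
    + intros Z. destruct p; simpl in Z; congruence.
    + intros (s & m & E & _). destruct p; congruence.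
  - intros p s m E; destruct p; congruence.
  - intros p x E; destruct p; congruence.
Qed.

Lemma wf_leaf_tree {X} (P : X -> Prop) x : P x -> wf P (leaf_tree x).
Proof.
  intros H. unfold leaf_tree. split; [|split; [|split]].
  - congruence.
  - intros p i; split.
    + destruct p; simpl; congruence.
    + intros (? & ? & E & _). destruct p; discriminate.
  - intros p s m E; destruct p; discriminate.
  - intros p y E; destruct p; try discriminate. injection E; intros; subst; auto.
Qed.

Lemma wf_node_tree {X} (P : X -> Prop) s m (f : nat -> X) :
  (is_param s = true <-> m <> None) -> (forall i, valid_child s i = true -> P (f i)) ->
  wf P (node_tree s m f).
Proof.
  intros H1 H2. unfold node_tree. split; [|split; [|split]].
  - congruence.
  - intros p i; split.
    + intros Z. destruct p as [|j [|k p]]; simpl in Z; try congruence.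
      destruct (valid_child s i) eqn:V; try congruence. eauto.
    + intros (s0 & m0 & E & V).
      destruct p as [|j [|k p]]; [|destruct (valid_child s j); discriminate|discriminate].
      injection E; intros; subst. simpl. rewrite V. congruence.
  - intros p s0 m0 E. destruct p as [|j [|k p]]; try discriminate.
    + injection E; intros; subst; auto.
    + destruct (valid_child s j); discriminate.
  - intros p x E. destruct p as [|j [|k p]]; try discriminate.
    destruct (valid_child s j) eqn:V; try discriminate. injection E; intros; subst; auto.
Qed.

Lemma flatten_node_tree_cons {X} s m (f : nat -> rtree X) i p :
  flatten (node_tree s m f) (i :: p) = if valid_child s i then f i p else LAbs.
Proof.
  unfold flatten. simpl.
  destruct (valid_child s i) eqn:V; destruct p; simpl; rewrite ?V; reflexivity.
Qed.

(** * Operational effect trees *)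

Inductive step_result :=
  | Silent (K : list comp) (M : comp)
  | Done (V : val)
  | Stuck
  | Branch (s : Op) (m : option nat) (K : list comp) (ch : nat -> comp).

(* [\z. let fix(F) => y in y z], as in the [CFix] clause of [approx]. *)
Definition fix_arg (a : ty) (V : val) : val :=
  VLam a (CLet (CFix (ren_v S V)) (CApp (VVar 0) (VVar 1))).

Definition step (K : list comp) (M : comp) : step_result :=
  match M with
  | CRet V => match K with [] => Done V | N :: K' => Silent K' (subst0 N V) end
  | CApp (VLam _ B) V => Silent K (subst0 B V)
  | CApp _ _ => Stuck
  | CLet M1 N => Silent (N :: K) M1
  | CFix V => match V with
              | VLam (TArr a _) _ => Silent K (CApp V (fix_arg a V))
              | _ => Stuck
              end
  | CCase V M1 N1 => match V with
                     | VZ => Silent K M1 | VS W => Silent K (subst0 N1 W) | _ => Stuck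
                     end
  | COp s Ms => Branch s None K (fun i => nth i Ms (CRet VStar))
  | COpP s V Ms => match val_num V with
                   | Some m => Branch s (Some m) K (fun i => nth i Ms (CRet VStar))
                   | None => Stuck
                   end
  | COpC s V => Branch s None K (fun i => CApp V (num i))
  | COpPC s V W => match val_num V with
                   | Some m => Branch s (Some m) K (fun i => CApp W (num i))
                   | None => Stuck
                   end
  end.

Definition run_step (r : step_result) (n : nat) (p : list nat) : label Op val :=
  match r with
  | Silent K M => approx n K M p
  | Done V => match p with [] => LLeaf V | _ => LAbs end
  | Stuck => bot_at p
  | Branch s m K ch => match p with
                       | [] => LNode s m
                       | i :: p' => if valid_child s i then approx n K (ch i) p' else LAbs
                       end
  end.

Lemma approx_S n K M p : approx (S n) K M p = run_step (step K M) n p.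
Proof.
  destruct M; cbn;
  repeat (cbn; match goal with |- context [match ?x with _ => _ end] => destruct x end);
  cbn; reflexivity.
Qed.

Lemma approx_le_S n K M p : label_le (approx n K M p) (approx (S n) K M p).
Proof.
  revert K M p; induction n; intros K M p.
  - apply label_le_bot_at.
  - rewrite !approx_S. destruct (step K M); simpl; auto using label_le_refl.
    destruct p; auto using label_le_refl. destruct (valid_child s n0); auto using label_le_refl.
Qed.

Lemma approx_le n m K M p : n <= m -> label_le (approx n K M p) (approx m K M p).
Proof.
  induction 1. apply label_le_refl. eapply label_le_trans; eauto using approx_le_S.
Qed.

Lemma approx_stable n m K M p : n <= m -> approx n K M p <> LBot -> approx n K M p <> LAbs ->
  approx m K M p = approx n K M p.
Proof. intros; eapply label_le_proper; eauto using approx_le. Qed.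

Definition label_chain {X} (c : nat -> label Op X) := forall n m, n <= m -> label_le (c n) (c m).

Lemma lsup_proper {X} (c : nat -> label Op X) n :
  label_chain c -> c n <> LBot -> c n <> LAbs -> lsup c = c n.
Proof.
  intros Ch H1 H2. unfold lsup.
  destruct (excluded_middle_informative _) as [H|H].
  - destruct (constructive_indefinite_description _ H) as [k [K1 K2]]; simpl.
    destruct (le_ge_dec n k).
    + eapply label_le_proper; eauto.
    + symmetry; eapply label_le_proper; eauto.
  - exfalso; eauto.
Qed.

Lemma lsup_attained {X} (c : nat -> label Op X) :
  lsup c <> LBot -> lsup c <> LAbs -> exists n, c n = lsup c.
Proof.
  intros H1 H2. unfold lsup in *.
  destruct (excluded_middle_informative _) as [H|H].
  - destruct (constructive_indefinite_description _ H) as [k [K1 K2]]; simpl in *. eauto.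
  - destruct (excluded_middle_informative _); congruence.
Qed.

Lemma lsup_not_abs {X} (c : nat -> label Op X) n : c n <> LAbs -> lsup c <> LAbs.
Proof.
  intros H. unfold lsup.
  destruct (excluded_middle_informative _) as [H1|H1].
  - destruct (constructive_indefinite_description _ H1) as [k [K1 K2]]; simpl in *. auto.
  - destruct (excluded_middle_informative _) as [H2|H2]; try congruence.
    destruct (c n) eqn:E; try congruence; exfalso;
    [eauto | apply H1; exists n; rewrite E; split; congruence ..].
Qed.

Lemma lsup_ge {X} (c : nat -> label Op X) n : label_chain c -> label_le (c n) (lsup c).
Proof.
  intros Ch. destruct (c n) eqn:E; unfold label_le; auto.
  all: left; rewrite <- E; symmetry; apply lsup_proper; auto; congruence.
Qed.

Definition eval_tree (K : list comp) (M : comp) : rtree val :=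
  fun p => lsup (fun n => approx n K M p).
Definition approx_tree (n : nat) (K : list comp) (M : comp) : rtree val :=
  fun p => approx n K M p.

Lemma approx_chain K M p : label_chain (fun n => approx n K M p).
Proof. intros n m H; apply approx_le; auto. Qed.

Lemma approx_tree_le n K M : tle_cpo (approx_tree n K M) (eval_tree K M).
Proof. intros p. apply (lsup_ge (fun n => approx n K M p)), approx_chain. Qed.

Lemma eval_tree_attained K M p : eval_tree K M p <> LBot -> eval_tree K M p <> LAbs ->
  exists n, approx n K M p = eval_tree K M p.
Proof. apply lsup_attained. Qed.

Lemma eval_tree_approx K M p n : approx n K M p <> LBot -> approx n K M p <> LAbs ->
  eval_tree K M p = approx n K M p.
Proof. intros; apply (lsup_proper (fun n => approx n K M p)); auto using approx_chain. Qed.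

Lemma tle_eval_tree (t : rtree val) K M :
  (forall p, t p <> LBot -> t p <> LAbs -> exists n, approx n K M p = t p) ->
  tle_cpo t (eval_tree K M).
Proof.
  intros H p. destruct (t p) eqn:E; unfold label_le; auto; left;
  (destruct (H p) as [n Hn]; [congruence|congruence|]);
  rewrite <- E, <- Hn; symmetry; apply eval_tree_approx; congruence.
Qed.

Lemma eval_tree_silent K M K' M' :
  step K M = Silent K' M' -> tle_cpo (eval_tree K' M') (eval_tree K M).
Proof.
  intros E. apply tle_eval_tree. intros p H1 H2.
  destruct (eval_tree_attained _ _ _ H1 H2) as [n Hn].
  exists (S n). rewrite approx_S, E. auto.
Qed.

Lemma approx_tree_S n K M : approx_tree (S n) K M = fun q => run_step (step K M) n q.
Proof. extensionality q. apply approx_S. Qed.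

Lemma approx_tree_branch n K M s m K' ch : step K M = Branch s m K' ch ->
  approx_tree (S n) K M = flatten (node_tree s m (fun i => approx_tree n K' (ch i))).
Proof.
  intros E. rewrite approx_tree_S, E. extensionality p. unfold flatten.
  destruct p as [|i p]; [reflexivity|].
  simpl. destruct (valid_child s i) eqn:V; destruct p; simpl; rewrite ?V; reflexivity.
Qed.

Lemma eval_tree_branch K M s m K' ch : step K M = Branch s m K' ch ->
  tle_cpo (flatten (node_tree s m (fun i => eval_tree K' (ch i)))) (eval_tree K M).
Proof.
  intros E. apply tle_eval_tree. intros p H1 H2.
  destruct p as [|i p].
  - exists 1. rewrite approx_S, E. reflexivity.
  - rewrite flatten_node_tree_cons in *. destruct (valid_child s i) eqn:V; [|congruence].
    destruct (eval_tree_attained K' (ch i) p H1 H2) as [n Hn].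
    exists (S n). rewrite approx_S, E. cbn [run_step]. rewrite V. auto.
Qed.

Lemma approx_tree_ret n V : approx_tree (S n) [] (CRet V) = leaf_tree V.
Proof. extensionality p. unfold approx_tree. rewrite approx_S. reflexivity. Qed.

Lemma eval_tree_ret V : tle_cpo (leaf_tree V) (eval_tree [] (CRet V)).
Proof. apply tle_eval_tree. intros p H1 H2. exists 1. rewrite approx_S. reflexivity. Qed.

Inductive stack_typed : ty -> list comp -> ty -> Prop :=
  | stack_typed_nil a : stack_typed a [] a
  | stack_typed_cons a b c N K :
      tyc [a] N b -> stack_typed b K c -> stack_typed a (N :: K) c.

Definition config_typed K M b := exists a, tyc [] M a /\ stack_typed a K b.

Definition step_result_typed (r : step_result) (b : ty) : Prop :=
  match r with
  | Silent K M => config_typed K M b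
  | Done V => tyv [] V b
  | Stuck => True
  | Branch s m K ch => (is_param s = true <-> m <> None) /\
                       forall i, valid_child s i = true -> config_typed K (ch i) b
  end.

Lemma config_typed_nil M t : tyc [] M t -> config_typed [] M t.
Proof. intros H; exists t; split; auto; constructor. Qed.

Ltac invert_typing := match goal with
  | H : tyc _ (CApp _ _) _ |- _ => inversion H; subst; clear H
  | H : tyc _ (CRet _) _ |- _ => inversion H; subst; clear H
  | H : tyc _ (CLet _ _) _ |- _ => inversion H; subst; clear H
  | H : tyc _ (CFix _) _ |- _ => inversion H; subst; clear H
  | H : tyc _ (CCase _ _ _) _ |- _ => inversion H; subst; clear H
  | H : tyc _ (COp _ _) _ |- _ => inversion H; subst; clear H
  | H : tyc _ (COpP _ _ _) _ |- _ => inversion H; subst; clear H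
  | H : tyc _ (COpC _ _) _ |- _ => inversion H; subst; clear H
  | H : tyc _ (COpPC _ _ _) _ |- _ => inversion H; subst; clear H
  | H : tyv _ (VLam _ _) _ |- _ => inversion H; subst; clear H
  | H : tyv _ (VS _) _ |- _ => inversion H; subst; clear H
  | H : stack_typed _ [] _ |- _ => inversion H; subst; clear H
  | H : stack_typed _ (_ :: _) _ |- _ => inversion H; subst; clear H
  end.

Lemma tyv_fix_arg a b V :
  tyv [] V (TArr (TArr a b) (TArr a b)) -> tyv [] (fix_arg a V) (TArr a b).
Proof.
  intros HV. unfold fix_arg. econstructor. econstructor.
  - econstructor. erewrite ren_v_closed; eauto. apply tyv_closed_weaken; eauto.
  - econstructor; econstructor; simpl; reflexivity.
Qed.

Lemma step_typed K M b : config_typed K M b -> step_result_typed (step K M) b.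
Proof.
  intros (a & HM & HK). destruct M; simpl; invert_typing;
  try (match goal with E : ar _ = _ |- _ =>
         try (match goal with |- context [val_num ?v] => destruct (val_num v) end;
              simpl; try exact I);
         unfold is_param, valid_child, nchildren; rewrite E end;
       split; [split; congruence|]; intros i Hi; try apply Nat.ltb_lt in Hi;
       eexists; split; eauto using nth_In; econstructor; eauto using tyv_num).
  - destruct v; simpl; auto. invert_typing.
    exists a; split; auto. eapply typing_subst0; eauto.
  - destruct K as [|N K]; simpl; invert_typing; auto.
    eexists; split; eauto. eapply typing_subst0; eauto.
  - eexists; split; eauto. econstructor; eauto.
  - destruct v; simpl; auto. invert_typing.
    eexists; split; [|eauto]. econstructor; [econstructor; eauto|].
    apply tyv_fix_arg. constructor; auto.
  - destruct v; simpl; auto; eexists; split; eauto.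
    invert_typing. eapply typing_subst0; eauto.
Qed.

Lemma approx_root n K M : approx n K M [] <> LAbs.
Proof.
  revert K M; induction n; intros K M. simpl; congruence.
  rewrite approx_S. destruct (step K M); simpl; try congruence; auto.
Qed.

Lemma approx_children n K M p i : approx n K M (p ++ [i]) <> LAbs <->
  exists s m, approx n K M p = LNode s m /\ valid_child s i = true.
Proof.
  revert K M p; induction n; intros K M p.
  - simpl. destruct p; simpl; split; try congruence; intros (? & ? & ? & ?); congruence.
  - rewrite !approx_S. destruct (step K M); simpl;
    try (destruct p; simpl; split; try congruence; intros (? & ? & ? & ?); congruence).
    + apply IHn.
    + destruct p as [|j p]; simpl.
      * destruct (valid_child s i) eqn:E.
        -- split; eauto. intros _. apply approx_root.
        -- split; try congruence. intros (? & ? & ? & ?). congruence.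
      * destruct (valid_child s j) eqn:E.
        -- apply IHn.
        -- split; try congruence. intros (? & ? & ? & ?). congruence.
Qed.

Lemma approx_param n K M b p s m : config_typed K M b -> approx n K M p = LNode s m ->
  (is_param s = true <-> m <> None).
Proof.
  revert K M p; induction n; intros K M p H.
  - simpl. destruct p; simpl; congruence.
  - rewrite approx_S. pose proof (step_typed K M b H) as ST.
    destruct (step K M); simpl in *; intros E0.
    + eauto.
    + destruct p; congruence.
    + destruct p; simpl in E0; congruence.
    + destruct p as [|j p].
      * injection E0; intros; subst. apply ST.
      * destruct (valid_child s0 j) eqn:E; try congruence.
        eapply IHn; [apply ST; eauto|exact E0].
Qed.

Lemma approx_leaf n K M b p V : config_typed K M b -> approx n K M p = LLeaf V -> tyv [] V b.
Proof.
  revert K M p; induction n; intros K M p H.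
  - simpl. destruct p; simpl; congruence.
  - rewrite approx_S. pose proof (step_typed K M b H) as ST.
    destruct (step K M); simpl in *; intros E0.
    + eauto.
    + destruct p; [injection E0; intros; subst; auto | congruence].
    + destruct p; simpl in E0; congruence.
    + destruct p as [|j p]; try congruence.
      destruct (valid_child s j) eqn:E; try congruence.
      eapply IHn; [apply ST; eauto|exact E0].
Qed.

Definition has_type b (V : val) := tyv [] V b.

Lemma wf_approx_tree n K M b : config_typed K M b -> wf (has_type b) (approx_tree n K M).
Proof.
  intros H; unfold approx_tree; split; [|split; [|split]].
  - apply approx_root.
  - intros p i; apply approx_children.
  - intros p s m; eapply approx_param; eauto.
  - intros p V; eapply approx_leaf; eauto.
Qed.

Lemma eval_tree_abs K M p : (forall n, approx n K M p = LAbs) -> eval_tree K M p = LAbs.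
Proof.
  intros H. unfold eval_tree, lsup.
  destruct (excluded_middle_informative _) as [[k [K1 K2]]|]; [exfalso; eauto|].
  destruct (excluded_middle_informative _) as [[k K1]|]; auto.
  rewrite H in K1. discriminate.
Qed.

Lemma wf_eval_tree K M b : config_typed K M b -> wf (has_type b) (eval_tree K M).
Proof.
  intros H.
  assert (Nabs : forall p n, approx n K M p <> LAbs -> eval_tree K M p <> LAbs)
    by (intros p n; apply (lsup_not_abs (fun n => approx n K M p) n)).
  split; [|split; [|split]].
  - apply (Nabs [] 0), approx_root.
  - intros p i; split.
    + intros Z. destruct (excluded_middle_informative
        (exists n, approx n K M (p ++ [i]) <> LAbs)) as [[n Hn]|Hn].
      * apply approx_children in Hn. destruct Hn as (s & m & E & V). exists s, m; split; auto.
        rewrite (eval_tree_approx K M p n); congruence.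
      * exfalso. apply Z, eval_tree_abs. intros n.
        destruct (approx n K M (p ++ [i])) eqn:E; auto; exfalso; apply Hn; exists n; congruence.
    + intros (s & m & E & V). destruct (eval_tree_attained K M p) as [n Hn]; try congruence.
      apply (Nabs _ n), approx_children. exists s, m; split; congruence.
  - intros p s m E. destruct (eval_tree_attained K M p) as [n Hn]; try congruence.
    apply (approx_param n K M b p); [exact H|]. congruence.
  - intros p V E. destruct (eval_tree_attained K M p) as [n Hn]; try congruence.
    apply (approx_leaf n K M b p); [exact H|]. congruence.
Qed.

Lemma wf_approx_tree_closed n M t : tyc [] M t -> wf (has_type t) (approx_tree n [] M).
Proof. intros H; apply wf_approx_tree, config_typed_nil; auto. Qed.
Lemma wf_eval_tree_closed M t : tyc [] M t -> wf (has_type t) (eval_tree [] M).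
Proof. intros H; apply wf_eval_tree, config_typed_nil; auto. Qed.
Lemma wfT_approx_tree n M t : tyc [] M t -> wfT (approx_tree n [] M).
Proof. intros H; eapply wfT_of_wf, wf_approx_tree_closed; eauto. Qed.
Lemma wfT_eval_tree M t : tyc [] M t -> wfT (eval_tree [] M).
Proof. intros H; eapply wfT_of_wf, wf_eval_tree_closed; eauto. Qed.

Definition stack_append (K2 : list comp) (r : step_result) : step_result :=
  match r with
  | Silent K M => Silent (K ++ K2) M
  | Branch s m K ch => Branch s m (K ++ K2) ch
  | r => r
  end.

Lemma step_stack_app K K2 M :
  step (K ++ K2) M =
  match step K M with Done V => step K2 (CRet V) | r => stack_append K2 r end.
Proof.
  destruct M; destruct K; simpl; try reflexivity;
  repeat (match goal with |- context [match ?x with _ => _ end] => destruct x end);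
  reflexivity.
Qed.

Lemma approx_stack_split n K K2 M p :
  label_le (approx n (K ++ K2) M p)
           (flatten (tree_map (fun V => approx n K2 (CRet V)) (approx_tree n K M)) p).
Proof.
  revert K M p; induction n; intros K M p.
  - apply label_le_bot_at.
  - rewrite approx_S, step_stack_app, approx_tree_S.
    destruct (step K M) as [K' M'|V| |s m K' ch] eqn:E; cbn [stack_append run_step].
    + eapply label_le_trans; [apply IHn|].
      apply flatten_tree_map_mono. intros V q. apply approx_le_S.
    + unfold flatten. destruct p; cbn [flat_go tree_map run_step];
      rewrite approx_S; apply label_le_refl.
    + apply label_le_bot_at.
    + unfold flatten. destruct p as [|i p]; cbn [flat_go tree_map run_step];
      [apply label_le_refl|].
      destruct (valid_child s i) eqn:V; [|unfold label_le; auto].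
      cbn [app]. rewrite flat_go_cons.
      rewrite (flat_go_ext _ (tree_map (fun V0 => approx (S n) K2 (CRet V0))
                                      (approx_tree n K' (ch i))));
        [| intros q; unfold tree_map, approx_tree; cbn [run_step]; rewrite V; reflexivity].
      eapply label_le_trans; [apply IHn|].
      apply (flatten_tree_map_mono _ _ (approx_tree n K' (ch i))).
      intros V0 q. apply approx_le_S.
Qed.

Lemma approx_stack_join n m K K2 M p :
  label_le (flatten (tree_map (fun V => approx m K2 (CRet V)) (approx_tree n K M)) p)
           (approx (n + m) (K ++ K2) M p).
Proof.
  revert K M p; induction n; intros K M p.
  - unfold flatten, approx_tree. destruct p; cbn; unfold label_le; auto.
  - rewrite approx_tree_S. simpl plus. rewrite approx_S, step_stack_app.
    destruct (step K M) as [K' M'|V| |s m0 K' ch] eqn:E; cbn [stack_append run_step].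
    + apply IHn.
    + unfold flatten. destruct p; cbn [flat_go tree_map run_step]; rewrite <- approx_S;
      apply approx_le; lia.
    + unfold flatten. destruct p; cbn; unfold label_le; auto.
    + unfold flatten. destruct p as [|i p]; cbn [flat_go tree_map run_step];
      [apply label_le_refl|].
      destruct (valid_child s i) eqn:V;
        [|rewrite flat_go_abs; [apply label_le_refl| unfold tree_map; cbn; rewrite V; reflexivity]].
      cbn [app]. rewrite flat_go_cons.
      rewrite (flat_go_ext _ (tree_map (fun V0 => approx m K2 (CRet V0))
                                      (approx_tree n K' (ch i))));
        [| intros q; unfold tree_map, approx_tree; cbn [run_step]; rewrite V; reflexivity].
      apply IHn.
Qed.

Lemma flatten_eval_tree_attained K K2 M : forall p q l,
  flat_go (tree_map (fun V => eval_tree K2 (CRet V)) (eval_tree K M)) q p = l ->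
  l <> LBot -> l <> LAbs ->
  exists n m, flat_go (tree_map (fun V => approx m K2 (CRet V)) (approx_tree n K M)) q p = l.
Proof.
  induction p as [|i p IH]; intros q l; cbn [flat_go]; unfold tree_map at 1;
  destruct (eval_tree K M q) as [| |V|s m0] eqn:E; intros H1 H2 H3; try congruence.
  - destruct (eval_tree_attained K2 (CRet V) []) as [m Hm]; try congruence.
    destruct (eval_tree_attained K M q) as [n Hn]; try congruence.
    exists n, m. cbn [flat_go]. unfold tree_map, approx_tree. rewrite Hn, E. congruence.
  - destruct (eval_tree_attained K M q) as [n Hn]; try congruence.
    exists n, 0. cbn [flat_go]. unfold tree_map, approx_tree. rewrite Hn, E. congruence.
  - destruct (eval_tree_attained K2 (CRet V) (i :: p)) as [m Hm]; try congruence.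
    destruct (eval_tree_attained K M q) as [n Hn]; try congruence.
    exists n, m. cbn [flat_go]. unfold tree_map at 1. unfold approx_tree.
    rewrite Hn, E. congruence.
  - destruct (eval_tree_attained K M q) as [n0 Hn0]; try congruence.
    destruct (IH (q ++ [i]) l H1 H2 H3) as (n1 & m & Hn1).
    exists (n0 + n1), m. cbn [flat_go]. unfold tree_map at 1. unfold approx_tree at 1.
    rewrite (approx_stable n0 (n0 + n1)); try lia; try congruence.
    rewrite Hn0, E.
    apply label_le_proper; try congruence. rewrite <- Hn1.
    apply flat_go_mono, tree_map_label_tree_le. intros q'. apply approx_le. lia.
Qed.

Lemma eval_tree_stack_join K K2 M :
  tle_cpo (flatten (tree_map (fun V => eval_tree K2 (CRet V)) (eval_tree K M)))
          (eval_tree (K ++ K2) M).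
Proof.
  apply tle_eval_tree. intros p H1 H2. unfold flatten in *.
  destruct (flatten_eval_tree_attained K K2 M p [] _ eq_refl H1 H2) as (n & m & H).
  exists (n + m). apply label_le_proper; auto.
  rewrite <- H. apply approx_stack_join.
Qed.

Lemma approx_tree_let_le n M1 M2 :
  tle_cpo (approx_tree (S n) [] (CLet M1 M2))
          (flatten (tree_map (fun V => approx_tree n [] (subst0 M2 V)) (approx_tree n [] M1))).
Proof.
  intros p. unfold approx_tree at 1. rewrite approx_S. cbn [step run_step].
  eapply label_le_trans; [apply (approx_stack_split n [] [M2] M1 p)|].
  apply flatten_tree_map_mono. intros V q. unfold approx_tree. destruct n.
  - apply label_le_refl.
  - rewrite approx_S. cbn [step run_step]. apply approx_le_S.
Qed.

Lemma eval_tree_let_ge N1 N2 :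
  tle_cpo (flatten (tree_map (fun W => eval_tree [] (subst0 N2 W)) (eval_tree [] N1)))
          (eval_tree [] (CLet N1 N2)).
Proof.
  intros p. eapply label_le_trans.
  - apply (flatten_tree_map_mono (fun W => eval_tree [] (subst0 N2 W))
                                 (fun W => eval_tree [N2] (CRet W))).
    intros W. apply eval_tree_silent. reflexivity.
  - eapply label_le_trans; [apply (eval_tree_stack_join [] [N2] N1)|].
    apply eval_tree_silent. reflexivity.
Qed.

(** * Modalities and the relator *)

Variable O : Type.
Variable sem : O -> rtree unit -> Prop.
Hypothesis sem_scott_open : forall o, scott_open Op ar (sem o).

Notation modal := (modal Op O sem).

(* The relator [O(R)] on arbitrary trees; [tsim] is its restriction to a domain. *)
Definition tree_lift {X Y} (R : X -> Y -> Prop) (t : rtree X) (t' : rtree Y) : Prop :=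
  forall (A : X -> Prop) o, modal o A t -> modal o (fun y => exists x, A x /\ R x y) t'.

Lemma modal_ext {X} (A B : X -> Prop) o (t : rtree X) :
  (forall x, A x <-> B x) -> modal o A t -> modal o B t.
Proof. intros H; unfold modal; rewrite (restrict_ext A B t H); auto. Qed.

Lemma modal_restrict_le {X Y} (t : rtree X) (t' : rtree Y) A B o :
  wfT t -> wfT t' -> tle_cpo (restrict A t) (restrict B t') -> modal o A t -> modal o B t'.
Proof.
  intros W W' L H. eapply (proj1 (sem_scott_open o)); eauto; eapply wfT_restrict; eauto.
Qed.

Lemma modal_mono {X} (t : rtree X) A B o :
  wfT t -> (forall x, A x -> B x) -> modal o A t -> modal o B t.
Proof.
  intros W H. apply modal_restrict_le; auto. intros p. unfold restrict. destruct (t p); auto.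
  destruct (excluded_middle_informative (A x)), (excluded_middle_informative (B x)); auto.
  exfalso; auto.
Qed.

Lemma modal_tle {X} (t t' : rtree X) A o :
  wfT t -> wfT t' -> tle_cpo t t' -> modal o A t -> modal o A t'.
Proof. intros W W' L. apply modal_restrict_le, restrict_tle; auto. Qed.

Lemma modal_approx_tree t M A o : tyc [] M t -> modal o A (optree M) ->
  exists n, modal o A (approx_tree n [] M).
Proof.
  intros T H.
  destruct (proj2 (sem_scott_open o) (fun n => restrict A (approx_tree n [] M))
                  (restrict A (optree M))) as [n Hn]; eauto.
  - intros n. eapply wfT_restrict, wf_approx_tree_closed; eauto.
  - intros n. apply restrict_tle. intros p. apply approx_le_S.
  - eapply wfT_restrict, wf_eval_tree_closed; eauto.
  - split.
    + intros n. apply restrict_tle, approx_tree_le.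
    + intros u Wu Hu p.
      destruct (eval_tree [] M p) eqn:E;
        try (unfold restrict; change (optree M p) with (eval_tree [] M p); rewrite E; auto; fail);
      destruct (eval_tree_attained [] M p) as [n Hn]; try congruence;
      rewrite <- (restrict_at A (approx_tree n [] M) (optree M) p Hn); apply Hu.
Qed.

Lemma tree_lift_comp {X Y Z} (R : X -> Y -> Prop) (S : Y -> Z -> Prop)
    (t : rtree X) (t' : rtree Y) (t'' : rtree Z) :
  tree_lift R t t' -> tree_lift S t' t'' ->
  tree_lift (fun x z => exists y, R x y /\ S y z) t t''.
Proof.
  intros H1 H2 A o H. apply H1, H2 in H. eapply modal_ext; [|exact H].
  intros z; firstorder.
Qed.

Lemma tree_lift_mono {X Y} (R R' : X -> Y -> Prop) (t : rtree X) (t' : rtree Y) :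
  wfT t' -> (forall x y, R x y -> R' x y) -> tree_lift R t t' -> tree_lift R' t t'.
Proof.
  intros W HR H A o HA. apply H in HA. eapply modal_mono; eauto.
  intros y (x & ? & ?); eauto.
Qed.

Lemma tree_lift_le_l {X Y} (R : X -> Y -> Prop) (t0 t : rtree X) (t' : rtree Y) :
  wfT t0 -> wfT t -> tle_cpo t0 t -> tree_lift R t t' -> tree_lift R t0 t'.
Proof. intros W0 W L H A o HA. apply H. eapply modal_tle; [exact W0|exact W|exact L|exact HA]. Qed.

Lemma tree_lift_le_r {X Y} (R : X -> Y -> Prop) (t : rtree X) (t' t'' : rtree Y) :
  wfT t' -> wfT t'' -> tle_cpo t' t'' -> tree_lift R t t' -> tree_lift R t t''.
Proof. intros W0 W L H A o HA. eapply modal_tle; [exact W0|exact W|exact L|apply H; exact HA]. Qed.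

Lemma tree_lift_pointwise {X Y} (R : X -> Y -> Prop) (t : rtree X) (t' : rtree Y) :
  wfT t -> wfT t' ->
  (forall p, t p = LAbs \/ t p = LBot \/
             (exists s m, t p = LNode s m /\ t' p = LNode s m) \/
             (exists x y, t p = LLeaf x /\ t' p = LLeaf y /\ R x y)) ->
  tree_lift R t t'.
Proof.
  intros W W' H A o. apply modal_restrict_le; auto. intros p. unfold restrict.
  destruct (H p) as [E|[E|[(s & m & E & E')|(x & y & E & E' & Rxy)]]]; rewrite E; auto.
  - rewrite E'; auto.
  - rewrite E'. destruct (excluded_middle_informative (A x)); auto.
    destruct (excluded_middle_informative (exists x0, A x0 /\ R x0 y)); auto.
    exfalso; eauto.
Qed.

Lemma tree_lift_map {X Y X' Y'} (R : X -> Y -> Prop) (S : X' -> Y' -> Prop)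
    (f : X -> X') (g : Y -> Y') (t : rtree X) (t' : rtree Y) :
  wfT t' -> (forall x y, R x y -> S (f x) (g y)) -> tree_lift R t t' ->
  tree_lift S (tree_map f t) (tree_map g t').
Proof.
  intros W HS H A o HA. unfold modal in *. rewrite restrict_tree_map in HA. rewrite restrict_tree_map.
  apply (H (fun x => A (f x))) in HA. eapply modal_mono; [exact W| |exact HA].
  intros y (x & Ax & Rxy). eauto.
Qed.

Lemma tree_lift_bot {X Y} (R : X -> Y -> Prop) (t' : rtree Y) : wfT t' -> tree_lift R bot_tree t'.
Proof.
  intros W A o. apply modal_restrict_le; auto. apply (wf_bot_tree (fun _ => True)).
  intros p. unfold restrict, bot_tree, bot_at. destruct p; auto.
Qed.

Lemma tree_lift_of_tsim {X Y} (D : X -> Prop) (R : X -> Y -> Prop) (t : rtree X) (t' : rtree Y) :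
  tsim Op O sem D R t t' -> wf D t -> wfT t' -> tree_lift R t t'.
Proof.
  intros H W W' A o HA. unfold modal in HA. rewrite (restrict_on_support D A t W) in HA.
  apply H in HA; [|intros x [_ Hx]; auto].
  eapply modal_mono; [exact W'| |exact HA].
  intros y (x & (Ax & _) & R'); eauto.
Qed.

Lemma sem_form_lift {X Y} (R : X -> Y -> Prop) A (x : rtree X) (y : rtree Y) :
  tree_lift R x y -> forall F, sem_form Op O sem F (restrict A x) ->
    sem_form Op O sem F (restrict (fun y => exists x, A x /\ R x y) y).
Proof.
  intros H F; induction F; simpl.
  - unfold modal. rewrite !restrict_True. apply H.
  - unfold modal. rewrite !restrict_False_restrict. intros Z.
    apply H in Z. eapply modal_ext; [|exact Z]. firstorder.
  - intros (i & Hi). eauto.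
  - intros Z i. eauto.
Qed.

Hypothesis sem_decomposable : decomposable Op ar O sem.

(* Decomposability applied to the trees of [T 1] obtained by restricting the
   leaves of [r] to [A] and those of [r'] to [R[A]]. *)
Lemma tree_lift_flatten {X Y} (R : X -> Y -> Prop) (r : rtree (rtree X)) (r' : rtree (rtree Y)) :
  wf wfT r -> wf wfT r' -> tree_lift (tree_lift R) r r' ->
  tree_lift R (flatten r) (flatten r').
Proof.
  intros W W' H A o HA. unfold modal in *. rewrite restrict_flatten in HA. rewrite restrict_flatten.
  set (B := fun y => exists x, A x /\ R x y).
  assert (T : tri_le Op O sem (flatten (tree_map (restrict A) r))
                             (flatten (tree_map (restrict B) r'))).
  { apply sem_decomposable.
    - eapply wf_tree_map; eauto. intros t Wt. eapply wfT_restrict; eauto.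
    - eapply wf_tree_map; eauto. intros t Wt. eapply wfT_restrict; eauto.
    - intros o' F HF. unfold modal in *. rewrite restrict_tree_map in HF. rewrite restrict_tree_map.
      apply H in HF. eapply modal_mono; [eapply wfT_of_wf; exact W'| |exact HF].
      intros y (x & Hx & Rxy). eapply sem_form_lift; eauto. }
  specialize (T (FTop O o)). simpl in T. unfold modal in T. rewrite !restrict_True in T. auto.
Qed.

(** * Similarity and its open extension *)

Notation simulation := (simulation Op ar O sem).
Notation simv := (simv Op ar O sem). Notation simc := (simc Op ar O sem).
Notation osimv := (openv Op ar simv). Notation osimc := (openc Op ar simc).

Lemma wf_optree M t : tyc [] M t -> wf (has_type t) (optree M).
Proof. apply wf_eval_tree_closed. Qed.

Lemma simc_tree_lift t M N : simc t M N -> tree_lift (simv t) (optree M) (optree N).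
Proof.
  intros (Rv & Rc & S & H).
  destruct (sim_tyc _ _ _ _ _ _ S _ _ _ H) as [T1 T2].
  eapply tree_lift_mono; [eapply wfT_eval_tree; eauto| |].
  2: { eapply tree_lift_of_tsim; [apply (sim_comp _ _ _ _ _ _ S _ _ _ H)|
         apply wf_optree; auto | eapply wfT_eval_tree; eauto]. }
  intros x y Hxy. exists Rv, Rc; auto.
Qed.

Lemma simulation_id :
  simulation (fun t V W => V = W /\ tyv [] V t) (fun t M N => M = N /\ tyc [] M t).
Proof.
  constructor.
  - intros t V W [-> H]; auto.
  - intros t M N [-> H]; auto.
  - intros V W [-> _]; auto.
  - intros t M N [-> H] A HA o Ho. eapply modal_ext; [|exact Ho].
    intros y; split; [intros Ay; exists y; auto|]. intros (x & Ax & -> & _); auto.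
  - intros t1 t V W [-> H] U HU. split; auto. econstructor; eauto.
Qed.

Lemma simv_refl t V : tyv [] V t -> simv t V V.
Proof. intros H. do 2 eexists; split; [apply simulation_id|]; simpl; auto. Qed.
Lemma simc_refl t M : tyc [] M t -> simc t M M.
Proof. intros H. do 2 eexists; split; [apply simulation_id|]; simpl; auto. Qed.

Lemma simulation_comp Rv1 Rc1 Rv2 Rc2 :
  simulation Rv1 Rc1 -> simulation Rv2 Rc2 ->
  simulation (fun t x z => exists y, Rv1 t x y /\ Rv2 t y z)
             (fun t x z => exists y, Rc1 t x y /\ Rc2 t y z).
Proof.
  intros S1 S2. constructor.
  - intros t V W (U & H1 & H2).
    exact (conj (proj1 (sim_tyv _ _ _ _ _ _ S1 _ _ _ H1)) (proj2 (sim_tyv _ _ _ _ _ _ S2 _ _ _ H2))).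
  - intros t V W (U & H1 & H2).
    exact (conj (proj1 (sim_tyc _ _ _ _ _ _ S1 _ _ _ H1)) (proj2 (sim_tyc _ _ _ _ _ _ S2 _ _ _ H2))).
  - intros V W (U & H1 & H2).
    apply (sim_nat _ _ _ _ _ _ S1) in H1. apply (sim_nat _ _ _ _ _ _ S2) in H2. congruence.
  - intros t M N (M1 & H1 & H2) A HA o Ho.
    apply (sim_comp _ _ _ _ _ _ S1 _ _ _ H1) in Ho; auto.
    apply (sim_comp _ _ _ _ _ _ S2 _ _ _ H2) in Ho.
    + eapply modal_ext; [|exact Ho]. intros z; firstorder.
    + intros y (x & Ax & R1). exact (proj2 (sim_tyv _ _ _ _ _ _ S1 _ _ _ R1)).
  - intros t1 t V W (U & H1 & H2) X HX. eexists; split.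
    + eapply (sim_app _ _ _ _ _ _ S1); eauto.
    + eapply (sim_app _ _ _ _ _ _ S2); eauto.
Qed.

Lemma simv_trans t V U W : simv t V U -> simv t U W -> simv t V W.
Proof.
  intros (R1 & C1 & S1 & H1) (R2 & C2 & S2 & H2).
  do 2 eexists; split; [apply (simulation_comp _ _ _ _ S1 S2)|]; simpl; eauto.
Qed.
Lemma simc_trans t M L N : simc t M L -> simc t L N -> simc t M N.
Proof.
  intros (R1 & C1 & S1 & H1) (R2 & C2 & S2 & H2).
  do 2 eexists; split; [apply (simulation_comp _ _ _ _ S1 S2)|]; simpl; eauto.
Qed.

Lemma simv_typed t V W : simv t V W -> tyv [] V t /\ tyv [] W t.
Proof. intros (R & C & S & H). eapply (sim_tyv _ _ _ _ _ _ S); eauto. Qed.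
Lemma simc_typed t M N : simc t M N -> tyc [] M t /\ tyc [] N t.
Proof. intros (R & C & S & H). eapply (sim_tyc _ _ _ _ _ _ S); eauto. Qed.

Lemma simv_nat V W : simv TNat V W -> V = W.
Proof. intros (R & C & S & H). eapply (sim_nat _ _ _ _ _ _ S); eauto. Qed.

Lemma simv_app t1 t V W U : simv (TArr t1 t) V W -> tyv [] U t1 -> simc t (CApp V U) (CApp W U).
Proof.
  intros (R & C & S & H) HU. do 2 eexists; split; eauto. eapply (sim_app _ _ _ _ _ _ S); eauto.
Qed.

Lemma Forall2_nth_error_r {A B} (P : A -> B -> Prop) l1 l2 n b :
  Forall2 P l1 l2 -> nth_error l2 n = Some b -> exists a, nth_error l1 n = Some a /\ P a b.
Proof.
  intros H; revert n; induction H; intros [|n] E; simpl in *; try discriminate.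
  - injection E; intros; subst; eauto.
  - eauto.
Qed.

Lemma sub_typed_inst G sg : Forall2 (fun U a => tyv [] U a) sg G -> sub_typed G [] (inst sg).
Proof.
  intros H n a E. destruct (Forall2_nth_error_r _ _ _ _ _ H E) as (U & E1 & HU).
  unfold inst. rewrite (nth_error_nth _ _ _ E1). auto.
Qed.

Lemma Forall2_map_seq G k (s : nat -> val) :
  (forall n a, nth_error G n = Some a -> tyv [] (s (k + n)) a) ->
  Forall2 (fun U a => tyv [] U a) (map s (seq k (length G))) G.
Proof.
  revert k; induction G as [|a G IH]; intros k H; simpl; constructor.
  - specialize (H 0 a eq_refl). rewrite Nat.add_0_r in H; auto.
  - apply IH. intros n b E. replace (S k + n) with (k + S n) by lia. apply H. auto.
Qed.

Lemma inst_agree (G : list ty) (s : nat -> val) :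
  agree_below (length G) (inst (map s (seq 0 (length G)))) s.
Proof.
  intros n Hn. unfold inst. rewrite nth_indep with (d' := s 0).
  - rewrite map_nth, seq_nth; auto.
  - rewrite length_map, length_seq; auto.
Qed.

Lemma openv_iff (R : ty -> val -> val -> Prop) G t V W :
  openv Op ar R G t V W <-> tyv G V t /\ tyv G W t /\
    forall s, sub_typed G [] s -> R t (sub_v s V) (sub_v s W).
Proof.
  split; intros (H1 & H2 & H3); split; auto; split; auto.
  - intros s Hs. specialize (H3 (map s (seq 0 (length G)))).
    rewrite !((proj1 sub_typed_agree) _ _ _ H1 _ _ (inst_agree G s)),
            !((proj1 sub_typed_agree) _ _ _ H2 _ _ (inst_agree G s)) in H3.
    apply H3, Forall2_map_seq. auto.
  - intros sg Hsg. apply H3, sub_typed_inst; auto.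
Qed.

Lemma openc_iff (R : ty -> comp -> comp -> Prop) G t M N :
  openc Op ar R G t M N <-> tyc G M t /\ tyc G N t /\
    forall s, sub_typed G [] s -> R t (sub_c s M) (sub_c s N).
Proof.
  split; intros (H1 & H2 & H3); split; auto; split; auto.
  - intros s Hs. specialize (H3 (map s (seq 0 (length G)))).
    rewrite !((proj2 sub_typed_agree) _ _ _ H1 _ _ (inst_agree G s)),
            !((proj2 sub_typed_agree) _ _ _ H2 _ _ (inst_agree G s)) in H3.
    apply H3, Forall2_map_seq. auto.
  - intros sg Hsg. apply H3, sub_typed_inst; auto.
Qed.

Lemma sub_typed_comp G D s s1 : sub_typed G D s -> sub_typed D [] s1 ->
  sub_typed G [] (fun n => sub_v s1 (s n)).
Proof. intros H1 H2 n a E. eapply (proj1 typing_sub); eauto. Qed.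

Lemma sub_typed_ren G D xi : ren_typed G D xi -> sub_typed G D (fun n => VVar (xi n)).
Proof. intros H n a E. constructor. auto. Qed.

Lemma sub_typed_nil : sub_typed [] [] VVar.
Proof. intros n a E; destruct n; discriminate. Qed.

Lemma osimv_typed G t V W : osimv G t V W -> tyv G V t /\ tyv G W t.
Proof. intros (A & B & _); auto. Qed.
Lemma osimc_typed G t M N : osimc G t M N -> tyc G M t /\ tyc G N t.
Proof. intros (A & B & _); auto. Qed.

Lemma osimv_refl G t V : tyv G V t -> osimv G t V V.
Proof.
  intros H. apply openv_iff. do 2 (split; auto). intros s Hs.
  apply simv_refl. eapply (proj1 typing_sub); eauto.
Qed.
Lemma osimc_refl G t M : tyc G M t -> osimc G t M M.
Proof.
  intros H. apply openc_iff. do 2 (split; auto). intros s Hs.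
  apply simc_refl. eapply (proj2 typing_sub); eauto.
Qed.

Lemma osimv_trans G t V U W : osimv G t V U -> osimv G t U W -> osimv G t V W.
Proof.
  rewrite !openv_iff. intros (A1 & A2 & A3) (B1 & B2 & B3). do 2 (split; auto).
  intros s Hs. eapply simv_trans; eauto.
Qed.
Lemma osimc_trans G t M L N : osimc G t M L -> osimc G t L N -> osimc G t M N.
Proof.
  rewrite !openc_iff. intros (A1 & A2 & A3) (B1 & B2 & B3). do 2 (split; auto).
  intros s Hs. eapply simc_trans; eauto.
Qed.

Lemma osimv_sub G D t V W s :
  osimv G t V W -> sub_typed G D s -> osimv D t (sub_v s V) (sub_v s W).
Proof.
  rewrite !openv_iff. intros (A1 & A2 & A3) Hs.
  split; [eapply (proj1 typing_sub); eauto|split; [eapply (proj1 typing_sub); eauto|]].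
  intros s1 Hs1. rewrite !(proj1 sub_sub). apply A3. eapply sub_typed_comp; eauto.
Qed.
Lemma osimc_sub G D t M N s :
  osimc G t M N -> sub_typed G D s -> osimc D t (sub_c s M) (sub_c s N).
Proof.
  rewrite !openc_iff. intros (A1 & A2 & A3) Hs.
  split; [eapply (proj2 typing_sub); eauto|split; [eapply (proj2 typing_sub); eauto|]].
  intros s1 Hs1. rewrite !(proj2 sub_sub). apply A3. eapply sub_typed_comp; eauto.
Qed.

Lemma osimv_ren G D t V W xi :
  osimv G t V W -> ren_typed G D xi -> osimv D t (ren_v xi V) (ren_v xi W).
Proof. intros H R. rewrite !(proj1 ren_as_sub). eauto using osimv_sub, sub_typed_ren. Qed.
Lemma osimc_ren G D t M N xi :
  osimc G t M N -> ren_typed G D xi -> osimc D t (ren_c xi M) (ren_c xi N).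
Proof. intros H R. rewrite !(proj2 ren_as_sub). eauto using osimc_sub, sub_typed_ren. Qed.

Lemma osimv_nil t V W : osimv [] t V W -> simv t V W.
Proof.
  rewrite openv_iff. intros (A1 & A2 & A3). specialize (A3 _ sub_typed_nil).
  rewrite !(proj1 sub_id) in A3. auto.
Qed.
Lemma osimc_nil t M N : osimc [] t M N -> simc t M N.
Proof.
  rewrite openc_iff. intros (A1 & A2 & A3). specialize (A3 _ sub_typed_nil).
  rewrite !(proj2 sub_id) in A3. auto.
Qed.
Lemma simv_osimv_nil t V W : simv t V W -> osimv [] t V W.
Proof.
  intros H. destruct (simv_typed _ _ _ H) as [T1 T2]. rewrite openv_iff.
  do 2 (split; auto). intros s _. rewrite !(sub_v_closed _ t); auto.
Qed.

(** * Howe's closure *)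

Notation dflt := (@CRet Op VStar).

Inductive howe_v : list ty -> ty -> val -> val -> Prop :=
  | howe_v_var G n t W : nth_error G n = Some t -> osimv G t (VVar n) W ->
      howe_v G t (VVar n) W
  | howe_v_star G W : osimv G TUnit VStar W -> howe_v G TUnit VStar W
  | howe_v_zero G W : osimv G TNat VZ W -> howe_v G TNat VZ W
  | howe_v_succ G V V' W : howe_v G TNat V V' -> osimv G TNat (VS V') W ->
      howe_v G TNat (VS V) W
  | howe_v_lam G t r M M' W : howe_c (t :: G) r M M' -> osimv G (TArr t r) (VLam t M') W ->
      howe_v G (TArr t r) (VLam t M) W
with howe_c : list ty -> ty -> comp -> comp -> Prop :=
  | howe_c_app G t r V V' U U' N : howe_v G (TArr t r) V V' -> howe_v G t U U' ->
      osimc G r (CApp V' U') N -> howe_c G r (CApp V U) N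
  | howe_c_ret G t V V' N : howe_v G t V V' -> osimc G t (CRet V') N ->
      howe_c G t (CRet V) N
  | howe_c_let G t r M M' K K' N : howe_c G t M M' -> howe_c (t :: G) r K K' ->
      osimc G r (CLet M' K') N -> howe_c G r (CLet M K) N
  | howe_c_fix G t r V V' N : howe_v G (TArr (TArr t r) (TArr t r)) V V' ->
      osimc G (TArr t r) (CFix V') N -> howe_c G (TArr t r) (CFix V) N
  | howe_c_case G t V V' M M' K K' N : howe_v G TNat V V' -> howe_c G t M M' ->
      howe_c (TNat :: G) t K K' -> osimc G t (CCase V' M' K') N ->
      howe_c G t (CCase V M K) N
  | howe_c_op G t s Ms Ns N : ar s = AFin (length Ms) -> length Ns = length Ms ->
      (forall i, i < length Ms -> howe_c G t (nth i Ms dflt) (nth i Ns dflt)) ->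
      osimc G t (COp s Ns) N -> howe_c G t (COp s Ms) N
  | howe_c_opP G t s V V' Ms Ns N : ar s = APFin (length Ms) -> howe_v G TNat V V' ->
      length Ns = length Ms ->
      (forall i, i < length Ms -> howe_c G t (nth i Ms dflt) (nth i Ns dflt)) ->
      osimc G t (COpP s V' Ns) N -> howe_c G t (COpP s V Ms) N
  | howe_c_opC G t s V V' N : ar s = ACount -> howe_v G (TArr TNat t) V V' ->
      osimc G t (COpC s V') N -> howe_c G t (COpC s V) N
  | howe_c_opPC G t s V V' W W' N : ar s = APCount -> howe_v G TNat V V' ->
      howe_v G (TArr TNat t) W W' -> osimc G t (COpPC s V' W') N ->
      howe_c G t (COpPC s V W) N.

Scheme howe_v_mind := Induction for howe_v Sort Prop
  with howe_c_mind := Induction for howe_c Sort Prop.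
Combined Scheme howe_ind from howe_v_mind, howe_c_mind.

Lemma typed_of_nth G t Ms : (forall i, i < length Ms -> tyc G (nth i Ms dflt) t) ->
  forall M, In M Ms -> tyc G M t.
Proof.
  intros H M HM. destruct (In_nth Ms M dflt HM) as (i & Hi & E). rewrite <- E. auto.
Qed.

Lemma howe_typed :
  (forall G t V W, howe_v G t V W -> tyv G V t /\ tyv G W t) /\
  (forall G t M N, howe_c G t M N -> tyc G M t /\ tyc G N t).
Proof.
  apply (howe_ind (fun G t V W _ => tyv G V t /\ tyv G W t)
                  (fun G t M N _ => tyc G M t /\ tyc G N t));
  intros; repeat match goal with H : _ /\ _ |- _ => destruct H end;
  try match goal with H : osimv _ _ _ _ |- _ => destruct (osimv_typed _ _ _ _ H) end;
  try match goal with H : osimc _ _ _ _ |- _ => destruct (osimc_typed _ _ _ _ H) end;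
  split; auto; try (econstructor; eauto; fail);
  econstructor; eauto; apply typed_of_nth; intros i Hi;
  match goal with H : forall i, i < _ -> _ /\ _ |- _ => apply H; auto end.
Qed.

Lemma howe_v_typed G t V W : howe_v G t V W -> tyv G V t /\ tyv G W t.
Proof. apply (proj1 howe_typed). Qed.
Lemma howe_c_typed G t M N : howe_c G t M N -> tyc G M t /\ tyc G N t.
Proof. apply (proj2 howe_typed). Qed.

Lemma howe_osim_trans :
  (forall G t V W, howe_v G t V W -> forall U, osimv G t W U -> howe_v G t V U) /\
  (forall G t M N, howe_c G t M N -> forall U, osimc G t N U -> howe_c G t M U).
Proof.
  split; intros G t V W H U HU; destruct H; econstructor; eauto using osimv_trans, osimc_trans.
Qed.

Lemma howe_refl :
  (forall G V t, tyv G V t -> howe_v G t V V) /\ (forall G M t, tyc G M t -> howe_c G t M M).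
Proof.
  apply (typing_ind Op ar (fun G V t _ => howe_v G t V V) (fun G M t _ => howe_c G t M M));
  intros; econstructor; eauto;
  try (apply osimv_refl; econstructor; eauto; fail);
  try (apply osimc_refl; econstructor; eauto; fail);
  intros i Hi; match goal with H : forall M, In M _ -> _ |- _ => apply H, nth_In; auto end.
Qed.

Lemma osimv_howe G t V W : osimv G t V W -> howe_v G t V W.
Proof.
  intros H. apply (proj1 howe_osim_trans _ _ V V); auto.
  apply (proj1 howe_refl), (osimv_typed _ _ _ _ H).
Qed.
Lemma osimc_howe G t M N : osimc G t M N -> howe_c G t M N.
Proof.
  intros H. apply (proj2 howe_osim_trans _ _ M M); auto.
  apply (proj2 howe_refl), (osimc_typed _ _ _ _ H).
Qed.

Ltac howe_typing := repeat match goal with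
  | H : howe_v _ _ _ _ |- _ => let T1 := fresh "T" in let T2 := fresh "T" in
       destruct (howe_v_typed _ _ _ _ H) as [T1 T2]; revert H
  | H : howe_c _ _ _ _ |- _ => let T1 := fresh "T" in let T2 := fresh "T" in
       destruct (howe_c_typed _ _ _ _ H) as [T1 T2]; revert H
  end; intros.

Ltac howe_compat := intros; howe_typing; econstructor; eauto;
  first [apply osimc_refl | apply osimv_refl]; econstructor; eauto.

Lemma howe_compat_app G t r V V' U U' :
  howe_v G (TArr t r) V V' -> howe_v G t U U' -> howe_c G r (CApp V U) (CApp V' U').
Proof. howe_compat. Qed.
Lemma howe_compat_ret G t V V' : howe_v G t V V' -> howe_c G t (CRet V) (CRet V').
Proof. howe_compat. Qed.
Lemma howe_compat_let G t r M M' K K' :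
  howe_c G t M M' -> howe_c (t :: G) r K K' -> howe_c G r (CLet M K) (CLet M' K').
Proof. howe_compat. Qed.
Lemma howe_compat_fix G t r V V' :
  howe_v G (TArr (TArr t r) (TArr t r)) V V' -> howe_c G (TArr t r) (CFix V) (CFix V').
Proof. howe_compat. Qed.
Lemma howe_compat_case G t V V' M M' K K' :
  howe_v G TNat V V' -> howe_c G t M M' -> howe_c (TNat :: G) t K K' ->
  howe_c G t (CCase V M K) (CCase V' M' K').
Proof. howe_compat. Qed.
Lemma howe_compat_opC G t s V V' :
  ar s = ACount -> howe_v G (TArr TNat t) V V' -> howe_c G t (COpC s V) (COpC s V').
Proof. howe_compat. Qed.
Lemma howe_compat_opPC G t s V V' W W' :
  ar s = APCount -> howe_v G TNat V V' -> howe_v G (TArr TNat t) W W' ->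
  howe_c G t (COpPC s V W) (COpPC s V' W').
Proof. howe_compat. Qed.
Lemma howe_compat_lam G t r M M' :
  howe_c (t :: G) r M M' -> howe_v G (TArr t r) (VLam t M) (VLam t M').
Proof. howe_compat. Qed.
Lemma howe_compat_succ G V V' : howe_v G TNat V V' -> howe_v G TNat (VS V) (VS V').
Proof. howe_compat. Qed.

Lemma howe_compat_op G t s Ms Ns :
  ar s = AFin (length Ms) -> length Ns = length Ms ->
  (forall i, i < length Ms -> howe_c G t (nth i Ms dflt) (nth i Ns dflt)) ->
  howe_c G t (COp s Ms) (COp s Ns).
Proof.
  intros E L H. econstructor; eauto. apply osimc_refl. econstructor; [congruence|].
  apply typed_of_nth. intros i Hi. apply (howe_c_typed _ _ _ _ (H i ltac:(lia))).
Qed.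
Lemma howe_compat_opP G t s V V' Ms Ns :
  ar s = APFin (length Ms) -> howe_v G TNat V V' -> length Ns = length Ms ->
  (forall i, i < length Ms -> howe_c G t (nth i Ms dflt) (nth i Ns dflt)) ->
  howe_c G t (COpP s V Ms) (COpP s V' Ns).
Proof.
  intros E HVV L H. econstructor; eauto. apply osimc_refl.
  econstructor; [congruence|apply (howe_v_typed _ _ _ _ HVV)|].
  apply typed_of_nth. intros i Hi. apply (howe_c_typed _ _ _ _ (H i ltac:(lia))).
Qed.

Lemma nth_map_dflt (f : comp -> comp) l i : f dflt = dflt -> nth i (map f l) dflt = f (nth i l dflt).
Proof. intros H. rewrite <- H at 1. apply map_nth. Qed.

Lemma howe_ren :
  (forall G t V W, howe_v G t V W ->
     forall D xi, ren_typed G D xi -> howe_v D t (ren_v xi V) (ren_v xi W)) /\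
  (forall G t M N, howe_c G t M N ->
     forall D xi, ren_typed G D xi -> howe_c D t (ren_c xi M) (ren_c xi N)).
Proof.
  apply (howe_ind
    (fun G t V W _ => forall D xi, ren_typed G D xi -> howe_v D t (ren_v xi V) (ren_v xi W))
    (fun G t M N _ => forall D xi, ren_typed G D xi -> howe_c D t (ren_c xi M) (ren_c xi N)));
  intros; simpl.
  1: { eapply howe_v_var; [apply H; exact e|]. apply (osimv_ren _ _ _ _ _ _ o); auto. }
  all: econstructor.
  all: try (match goal with H : osimv _ _ _ _ |- osimv _ _ _ _ =>
              apply (osimv_ren _ _ _ _ _ _ H); eauto end).
  all: try (match goal with H : osimc _ _ _ _ |- osimc _ _ _ _ =>
              apply (osimc_ren _ _ _ _ _ _ H); eauto end).
  all: rewrite ?length_map; eauto using ren_typed_up.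
  all: intros i Hi; rewrite !nth_map_dflt; auto.
Qed.

Definition howe_sub_rel G D (s s' : nat -> val) :=
  forall n a, nth_error G n = Some a -> howe_v D a (s n) (s' n).

Lemma howe_sub_rel_up G D s s' t :
  howe_sub_rel G D s s' -> howe_sub_rel (t :: G) (t :: D) (upsub s) (upsub s').
Proof.
  intros H [|n] a E; simpl in *.
  - injection E; intros; subst. apply (proj1 howe_refl). constructor; auto.
  - apply (proj1 howe_ren _ _ _ _ (H n a E)). intros k b Ek; simpl; auto.
Qed.

Lemma howe_sub_rel_typed G D s s' : howe_sub_rel G D s s' -> sub_typed G D s'.
Proof. intros H n a E. apply (howe_v_typed _ _ _ _ (H n a E)). Qed.

Lemma howe_sub :
  (forall G t V W, howe_v G t V W ->
     forall D s s', howe_sub_rel G D s s' -> howe_v D t (sub_v s V) (sub_v s' W)) /\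
  (forall G t M N, howe_c G t M N ->
     forall D s s', howe_sub_rel G D s s' -> howe_c D t (sub_c s M) (sub_c s' N)).
Proof.
  apply (howe_ind
    (fun G t V W _ => forall D s s', howe_sub_rel G D s s' -> howe_v D t (sub_v s V) (sub_v s' W))
    (fun G t M N _ => forall D s s', howe_sub_rel G D s s' -> howe_c D t (sub_c s M) (sub_c s' N)));
  intros; simpl.
  1: { apply (proj1 howe_osim_trans _ _ _ _ (H _ _ e)).
       apply (osimv_sub _ _ _ _ _ _ o). eapply howe_sub_rel_typed; eauto. }
  all: econstructor.
  all: try (match goal with H : osimv _ _ _ _ |- osimv _ _ _ _ =>
              apply (osimv_sub _ _ _ _ _ _ H); eapply howe_sub_rel_typed; eauto end).
  all: try (match goal with H : osimc _ _ _ _ |- osimc _ _ _ _ =>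
              apply (osimc_sub _ _ _ _ _ _ H); eapply howe_sub_rel_typed; eauto end).
  all: rewrite ?length_map; eauto using howe_sub_rel_up.
  all: intros i Hi; rewrite !nth_map_dflt; auto.
Qed.

Lemma howe_c_subst0 a t M M' V W :
  howe_c [a] t M M' -> howe_v [] a V W -> howe_c [] t (subst0 M V) (subst0 M' W).
Proof.
  intros H1 H2. rewrite !subst0_scons. eapply (proj2 howe_sub); eauto.
  intros [|k] b E; simpl in *; [injection E; intros; subst; auto | destruct k; discriminate].
Qed.

Lemma howe_v_nat V W : howe_v [] TNat V W -> V = W.
Proof.
  revert W; induction V; intros W H; inversion H; subst.
  - apply simv_nat, osimv_nil; auto.
  - match goal with H1 : howe_v _ _ V _ |- _ => apply IHV in H1 end. subst.
    apply simv_nat, osimv_nil; auto.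
  - destruct n; discriminate.
Qed.

Lemma howe_v_lam_inv G a t a' B V' : howe_v G (TArr a t) (VLam a' B) V' ->
  exists B0, howe_c (a :: G) t B B0 /\ osimv G (TArr a t) (VLam a B0) V'.
Proof. intros H; inversion H; subst; eauto. Qed.

Lemma howe_v_osim_nil t U V W : howe_v [] t U V -> simv t V W -> howe_v [] t U W.
Proof. intros H1 H2. apply (proj1 howe_osim_trans _ _ _ _ H1), simv_osimv_nil; auto. Qed.

(** * Howe's closure is a simulation *)

Definition howe_approx_lift n := forall t M N,
  howe_c [] t M N -> tree_lift (howe_v [] t) (approx_tree n [] M) (eval_tree [] N).

Lemma howe_lift_simc_r t {X} (x : rtree X) N1 N (R : X -> val -> Prop) :
  (forall a b c, R a b -> simv t b c -> R a c) ->
  tree_lift R x (eval_tree [] N1) -> simc t N1 N -> tree_lift R x (eval_tree [] N).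
Proof.
  intros HR H1 H2. destruct (simc_typed _ _ _ H2) as [T1 T2].
  eapply tree_lift_mono; [eapply wfT_eval_tree; eauto| |].
  2: { apply (tree_lift_comp R (simv t) _ _ _ H1), simc_tree_lift; exact H2. }
  intros a c (b & Hab & Hbc). eauto.
Qed.

Lemma howe_lift_stuck n t M N : step [] M = Stuck -> tyc [] N t ->
  tree_lift (howe_v [] t) (approx_tree (S n) [] M) (eval_tree [] N).
Proof. intros E T. rewrite approx_tree_S, E. apply tree_lift_bot. eapply wfT_eval_tree; eauto. Qed.

Lemma howe_lift_silent n t M M1 M' M1' N : howe_approx_lift n ->
  step [] M = Silent [] M1 -> step [] M' = Silent [] M1' ->
  howe_c [] t M1 M1' -> tyc [] M' t -> simc t M' N ->
  tree_lift (howe_v [] t) (approx_tree (S n) [] M) (eval_tree [] N).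
Proof.
  intros IHn E E' H T S. rewrite approx_tree_S, E. cbn [run_step].
  eapply (howe_lift_simc_r t _ M'); [eauto using howe_v_osim_nil| |exact S].
  destruct (howe_c_typed _ _ _ _ H) as [T1 T2].
  eapply tree_lift_le_r; [eapply wfT_eval_tree; eauto|eapply wfT_eval_tree; eauto|
                          apply eval_tree_silent; exact E'|].
  apply IHn; auto.
Qed.

Lemma howe_lift_branch n t M M' N s m ch ch' : howe_approx_lift n ->
  step [] M = Branch s m [] ch -> step [] M' = Branch s m [] ch' ->
  (is_param s = true <-> m <> None) ->
  (forall i, valid_child s i = true -> howe_c [] t (ch i) (ch' i)) ->
  tyc [] M' t -> simc t M' N ->
  tree_lift (howe_v [] t) (approx_tree (S n) [] M) (eval_tree [] N).
Proof.
  intros IHn E E' P HCh T S.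
  rewrite (approx_tree_branch n [] M s m [] ch E).
  eapply (howe_lift_simc_r t _ M'); [eauto using howe_v_osim_nil| |exact S].
  assert (W1 : wf wfT (node_tree s m (fun i => approx_tree n [] (ch i)))).
  { apply wf_node_tree; auto. intros i Vi.
    destruct (howe_c_typed _ _ _ _ (HCh i Vi)). eapply wfT_approx_tree; eauto. }
  assert (W2 : wf (wf (has_type t)) (node_tree s m (fun i => eval_tree [] (ch' i)))).
  { apply wf_node_tree; auto. intros i Vi.
    destruct (howe_c_typed _ _ _ _ (HCh i Vi)). eapply wf_eval_tree_closed; eauto. }
  assert (W3 : wf wfT (node_tree s m (fun i => eval_tree [] (ch' i))))
    by (eapply wf_weaken; [exact W2|]; intros x Hx; eapply wfT_of_wf; eauto).
  eapply tree_lift_le_r; [eapply wfT_of_wf, wf_flatten, W2 | eapply wfT_eval_tree; eauto |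
                          apply (eval_tree_branch [] M' s m [] ch' E') |].
  apply tree_lift_flatten; [exact W1|exact W3|].
  apply tree_lift_pointwise; [eapply wfT_of_wf; exact W1|eapply wfT_of_wf; exact W3|].
  intros p. unfold node_tree. destruct p as [|i [|j p]]; [right; right; left; eauto| |left; auto].
  destruct (valid_child s i) eqn:Vi; [|left; auto].
  right; right; right. do 2 eexists; split; [reflexivity|split; [reflexivity|]]. auto.
Qed.

Lemma howe_lift_ret n t V V' N : howe_v [] t V V' -> osimc [] t (CRet V') N ->
  tree_lift (howe_v [] t) (approx_tree (S n) [] (CRet V)) (eval_tree [] N).
Proof.
  intros H S. destruct (howe_v_typed _ _ _ _ H) as [T1 T2].
  assert (W : forall x : val, wfT (leaf_tree x))
    by (intros x; eapply wfT_of_wf, (wf_leaf_tree (fun _ => True)); auto).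
  rewrite approx_tree_ret.
  eapply (howe_lift_simc_r t _ (CRet V'));
    [eauto using howe_v_osim_nil| |apply osimc_nil; exact S].
  eapply tree_lift_le_r; [apply W|eapply wfT_eval_tree; constructor; eauto|
                          apply eval_tree_ret|].
  apply tree_lift_pointwise; [apply W|apply W|].
  intros p; unfold leaf_tree; destruct p; [|left; auto]. right; right; right. eauto.
Qed.

Lemma howe_lift_let n a t M1 M1' M2 M2' N : howe_approx_lift n ->
  howe_c [] a M1 M1' -> howe_c [a] t M2 M2' -> osimc [] t (CLet M1' M2') N ->
  tree_lift (howe_v [] t) (approx_tree (S n) [] (CLet M1 M2)) (eval_tree [] N).
Proof.
  intros IHn H1 H2 S.
  destruct (howe_c_typed _ _ _ _ H1) as [T1 T1'].
  destruct (howe_c_typed _ _ _ _ H2) as [T2 T2'].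
  set (r := tree_map (fun V => approx_tree n [] (subst0 M2 V)) (approx_tree n [] M1)).
  set (r' := tree_map (fun W => eval_tree [] (subst0 M2' W)) (eval_tree [] M1')).
  assert (W1 : wf wfT r).
  { eapply wf_tree_map; [apply (wf_approx_tree_closed n M1 a); auto|].
    intros V HV'. eapply wfT_approx_tree, typing_subst0; eauto. }
  assert (W2 : wf (wf (has_type t)) r').
  { eapply wf_tree_map; [apply (wf_eval_tree_closed M1' a); auto|].
    intros V HV'. eapply wf_eval_tree_closed, typing_subst0; eauto. }
  assert (W3 : wf wfT r')
    by (eapply wf_weaken; [exact W2|]; intros x Hx; eapply wfT_of_wf; eauto).
  eapply tree_lift_le_l; [eapply wfT_approx_tree; econstructor; eauto|
                          eapply wfT_of_wf, wf_flatten, W1|apply approx_tree_let_le|].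
  eapply (howe_lift_simc_r t _ (CLet M1' M2'));
    [eauto using howe_v_osim_nil| |apply osimc_nil; exact S].
  eapply tree_lift_le_r; [eapply wfT_of_wf, wf_flatten, W2|
                          eapply wfT_eval_tree; econstructor; eauto|apply eval_tree_let_ge|].
  apply tree_lift_flatten; [exact W1|exact W3|].
  apply (tree_lift_map (howe_v [] a)); [eapply wfT_eval_tree; eauto| |apply IHn; auto].
  intros V W HVW. apply IHn. eapply howe_c_subst0; eauto.
Qed.

Lemma howe_lift_app n a t V V' U U' N : howe_approx_lift n ->
  howe_v [] (TArr a t) V V' -> howe_v [] a U U' -> osimc [] t (CApp V' U') N ->
  tree_lift (howe_v [] t) (approx_tree (S n) [] (CApp V U)) (eval_tree [] N).
Proof.
  intros IHn H1 H2 S.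
  destruct (howe_v_typed _ _ _ _ H1) as [T1 T1'].
  destruct (howe_v_typed _ _ _ _ H2) as [T2 T2'].
  destruct (tyv_arr_lam _ _ _ T1) as [B ->].
  destruct (howe_v_lam_inv _ _ _ _ _ _ H1) as (B0 & HB & HS).
  destruct (howe_c_typed _ _ _ _ HB) as [T4 T4'].
  eapply (howe_lift_silent n t _ (subst0 B U) (CApp (VLam a B0) U') (subst0 B0 U')); auto.
  - eapply howe_c_subst0; eauto.
  - econstructor; eauto. constructor; auto.
  - eapply simc_trans; [eapply simv_app; [apply osimv_nil; exact HS|exact T2']|].
    apply osimc_nil; exact S.
Qed.

Lemma howe_lift_fix n a b V V' N : howe_approx_lift n ->
  howe_v [] (TArr (TArr a b) (TArr a b)) V V' -> osimc [] (TArr a b) (CFix V') N ->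
  tree_lift (howe_v [] (TArr a b)) (approx_tree (S n) [] (CFix V)) (eval_tree [] N).
Proof.
  intros IHn H1 S.
  destruct (howe_v_typed _ _ _ _ H1) as [T1 T1'].
  destruct (tyv_arr_lam _ _ _ T1) as [B ->].
  destruct (tyv_arr_lam _ _ _ T1') as [B' ->].
  eapply (howe_lift_silent n _ _ _ (CFix (VLam (TArr a b) B'))); [exact IHn|reflexivity|reflexivity| | |].
  - apply (howe_compat_app _ (TArr a b)); auto. unfold fix_arg.
    apply howe_compat_lam, (howe_compat_let _ (TArr a b)).
    + apply howe_compat_fix, (proj1 howe_ren _ _ _ _ H1).
      intros k c E; destruct k; discriminate.
    + apply (proj2 howe_refl). econstructor; constructor; reflexivity.
  - constructor; auto.
  - apply osimc_nil; exact S.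
Qed.

Lemma howe_lift_case n t V V' M1 M1' K K' N : howe_approx_lift n ->
  howe_v [] TNat V V' -> howe_c [] t M1 M1' -> howe_c [TNat] t K K' ->
  osimc [] t (CCase V' M1' K') N ->
  tree_lift (howe_v [] t) (approx_tree (S n) [] (CCase V M1 K)) (eval_tree [] N).
Proof.
  intros IHn H1 H2 H3 S.
  destruct (howe_v_typed _ _ _ _ H1) as [T1 T1'].
  destruct (osimc_typed _ _ _ _ S) as [T3 T3'].
  apply howe_v_nat in H1. subst V'.
  destruct V; try (eapply howe_lift_stuck; [reflexivity|exact T3']).
  - eapply (howe_lift_silent n t _ M1 (CCase VZ M1' K') M1'); auto. apply osimc_nil; exact S.
  - eapply (howe_lift_silent n t _ (subst0 K V) (CCase (VS V) M1' K') (subst0 K' V)); auto.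
    + eapply howe_c_subst0; eauto. apply (proj1 howe_refl). inversion T1; auto.
    + apply osimc_nil; exact S.
Qed.

Lemma valid_child_lt s k i :
  ar s = AFin k \/ ar s = APFin k -> valid_child s i = true -> i < k.
Proof.
  intros E V. unfold valid_child, nchildren in V. destruct E as [E|E]; rewrite E in V;
  apply Nat.ltb_lt; auto.
Qed.

Lemma howe_lift_op n t s Ms Ns N : howe_approx_lift n ->
  ar s = AFin (length Ms) -> length Ns = length Ms ->
  (forall i, i < length Ms -> howe_c [] t (nth i Ms dflt) (nth i Ns dflt)) ->
  osimc [] t (COp s Ns) N ->
  tree_lift (howe_v [] t) (approx_tree (S n) [] (COp s Ms)) (eval_tree [] N).
Proof.
  intros IHn E L H S. destruct (osimc_typed _ _ _ _ S) as [T3 T3'].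
  eapply (howe_lift_branch n t _ (COp s Ns) N s None);
    [exact IHn|reflexivity|reflexivity| | |exact T3|apply osimc_nil; exact S].
  - unfold is_param. rewrite E. split; congruence.
  - intros i Vi. apply H. eapply valid_child_lt; eauto.
Qed.

Lemma howe_lift_opP n t s V V' Ms Ns N : howe_approx_lift n ->
  ar s = APFin (length Ms) -> howe_v [] TNat V V' -> length Ns = length Ms ->
  (forall i, i < length Ms -> howe_c [] t (nth i Ms dflt) (nth i Ns dflt)) ->
  osimc [] t (COpP s V' Ns) N ->
  tree_lift (howe_v [] t) (approx_tree (S n) [] (COpP s V Ms)) (eval_tree [] N).
Proof.
  intros IHn E HVV L H S. destruct (osimc_typed _ _ _ _ S) as [T3 T3'].
  apply howe_v_nat in HVV. subst V'.
  destruct (val_num V) as [m|] eqn:Vn;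
    [|eapply howe_lift_stuck; [simpl; rewrite Vn; reflexivity|exact T3']].
  eapply (howe_lift_branch n t _ (COpP s V Ns) N s (Some m));
    [exact IHn|simpl; rewrite Vn; reflexivity|simpl; rewrite Vn; reflexivity| | |
     exact T3|apply osimc_nil; exact S].
  - unfold is_param. rewrite E. split; congruence.
  - intros i Vi. apply H. eapply valid_child_lt; eauto.
Qed.

Lemma howe_lift_opC n t s V V' N : howe_approx_lift n ->
  ar s = ACount -> howe_v [] (TArr TNat t) V V' -> osimc [] t (COpC s V') N ->
  tree_lift (howe_v [] t) (approx_tree (S n) [] (COpC s V)) (eval_tree [] N).
Proof.
  intros IHn E HVV S. destruct (osimc_typed _ _ _ _ S) as [T3 T3'].
  eapply (howe_lift_branch n t _ (COpC s V') N s None);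
    [exact IHn|reflexivity|reflexivity| | |exact T3|apply osimc_nil; exact S].
  - unfold is_param. rewrite E. split; congruence.
  - intros i Vi. eapply howe_compat_app; eauto.
    apply (proj1 howe_refl), tyv_closed_weaken, tyv_num.
Qed.

Lemma howe_lift_opPC n t s V V' W W' N : howe_approx_lift n ->
  ar s = APCount -> howe_v [] TNat V V' -> howe_v [] (TArr TNat t) W W' ->
  osimc [] t (COpPC s V' W') N ->
  tree_lift (howe_v [] t) (approx_tree (S n) [] (COpPC s V W)) (eval_tree [] N).
Proof.
  intros IHn E HVV HW S. destruct (osimc_typed _ _ _ _ S) as [T3 T3'].
  apply howe_v_nat in HVV. subst V'.
  destruct (val_num V) as [m|] eqn:Vn;
    [|eapply howe_lift_stuck; [simpl; rewrite Vn; reflexivity|exact T3']].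
  eapply (howe_lift_branch n t _ (COpPC s V W') N s (Some m));
    [exact IHn|simpl; rewrite Vn; reflexivity|simpl; rewrite Vn; reflexivity| | |
     exact T3|apply osimc_nil; exact S].
  - unfold is_param. rewrite E. split; congruence.
  - intros i Vi. eapply howe_compat_app; eauto.
    apply (proj1 howe_refl), tyv_closed_weaken, tyv_num.
Qed.

Lemma howe_approx_lift_all n : howe_approx_lift n.
Proof.
  induction n; intros t M N H.
  - destruct (howe_c_typed _ _ _ _ H) as [T1 T2].
    apply tree_lift_bot. eapply wfT_eval_tree; eauto.
  - remember [] as G eqn:EG. destruct H; subst G.
    + eapply howe_lift_app; eauto.
    + eapply howe_lift_ret; eauto.
    + eapply howe_lift_let; eauto.
    + eapply howe_lift_fix; eauto.
    + eapply howe_lift_case; eauto.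
    + eapply howe_lift_op; eauto.
    + eapply howe_lift_opP; eauto.
    + eapply howe_lift_opC; eauto.
    + eapply howe_lift_opPC; eauto.
Qed.

Lemma howe_simulation : simulation (fun t => howe_v [] t) (fun t => howe_c [] t).
Proof.
  constructor.
  - intros t V W H. apply (howe_v_typed _ _ _ _ H).
  - intros t M N H. apply (howe_c_typed _ _ _ _ H).
  - intros V W H. apply howe_v_nat; auto.
  - intros t M N H A HA o Ho.
    destruct (howe_c_typed _ _ _ _ H) as [T1 T2].
    destruct (modal_approx_tree t M A o T1 Ho) as [n Hn].
    exact (howe_approx_lift_all n t M N H A o Hn).
  - intros t1 t V W H U HU. eapply howe_compat_app; eauto. apply (proj1 howe_refl); auto.
Qed.

Lemma howe_c_simc t M N : howe_c [] t M N -> simc t M N.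
Proof. intros H. do 2 eexists; split; [apply howe_simulation|exact H]. Qed.
Lemma howe_v_simv t V W : howe_v [] t V W -> simv t V W.
Proof. intros H. do 2 eexists; split; [apply howe_simulation|exact H]. Qed.

Lemma howe_sub_rel_refl G s : sub_typed G [] s -> howe_sub_rel G [] s s.
Proof. intros H n a E. apply (proj1 howe_refl). auto. Qed.

Lemma howe_c_osimc G t M N : howe_c G t M N -> osimc G t M N.
Proof.
  intros H. destruct (howe_c_typed _ _ _ _ H) as [T1 T2]. apply openc_iff.
  do 2 (split; auto). intros s Hs. apply howe_c_simc.
  eapply (proj2 howe_sub); eauto using howe_sub_rel_refl.
Qed.
Lemma howe_v_osimv G t V W : howe_v G t V W -> osimv G t V W.
Proof.
  intros H. destruct (howe_v_typed _ _ _ _ H) as [T1 T2]. apply openv_iff.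
  do 2 (split; auto). intros s Hs. apply howe_v_simv.
  eapply (proj1 howe_sub); eauto using howe_sub_rel_refl.
Qed.

Lemma Forall2_nth {A} (R : A -> A -> Prop) l1 l2 d : Forall2 R l1 l2 ->
  length l2 = length l1 /\ forall i, i < length l1 -> R (nth i l1 d) (nth i l2 d).
Proof.
  induction 1; simpl; split; auto.
  - intros i Hi; lia.
  - destruct IHForall2; auto.
  - destruct IHForall2 as [_ H2]. intros [|i] Hi; auto. apply H2. lia.
Qed.

Lemma osim_compatible : compatible Op ar osimv osimc.
Proof.
  constructor; intros; repeat match goal with
    | H : Forall2 _ _ _ |- _ => destruct (Forall2_nth _ _ _ dflt H) as [? ?]; clear H
    end.
  - apply osimv_refl. constructor; auto.
  - apply osimv_refl. constructor.
  - apply osimv_refl. constructor.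
  - apply howe_v_osimv, howe_compat_succ, osimv_howe; auto.
  - apply howe_v_osimv, howe_compat_lam, osimc_howe; auto.
  - apply howe_c_osimc. eapply howe_compat_app; apply osimv_howe; eauto.
  - apply howe_c_osimc. eapply howe_compat_ret; apply osimv_howe; eauto.
  - apply howe_c_osimc. eapply howe_compat_let; apply osimc_howe; eauto.
  - apply howe_c_osimc. eapply howe_compat_fix; apply osimv_howe; eauto.
  - apply howe_c_osimc.
    eapply howe_compat_case; [apply osimv_howe|apply osimc_howe|apply osimc_howe]; eauto.
  - apply howe_c_osimc, howe_compat_op; auto. intros i Hi. apply osimc_howe; auto.
  - apply howe_c_osimc, howe_compat_opP; auto using osimv_howe.
    intros i Hi. apply osimc_howe; auto.
  - apply howe_c_osimc, howe_compat_opC; auto using osimv_howe.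
  - apply howe_c_osimc, howe_compat_opPC; auto using osimv_howe.
Qed.

End HoweMethod.

Theorem theorem3 (Op : Type) (ar : Op -> arity) (O : Type)
    (sem : O -> rtree Op unit -> Prop) :
  (forall o : O, scott_open Op ar (sem o)) ->
  decomposable Op ar O sem ->
  compatible Op ar (openv Op ar (simv Op ar O sem)) (openc Op ar (simc Op ar O sem)).
Proof. exact (osim_compatible Op ar O sem). Qed.
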